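(* Let $\lambda_1,\lambda_2>0$, $u^*>0$, $\delta>0$, $\varepsilon>0$ and $\beta\ge0$ with $\varepsilon\lambda_2+\beta<u^*$. Consider the system $\dot\eta_1=u^*-u-\phi_2(\eta_2)$, $\dot\eta_2=u^*-u+\phi_1(\eta_1)$ under the feedback $$u=u^*+\varepsilon\phi_2(\eta_2)+\beta\frac{\varphi(\eta)}{\sqrt{\delta^2+(\min(0,\varphi(\eta)))^2}},\qquad \varphi(\eta)=\phi_1(\eta_1)+(1+\varepsilon)\phi_2(\eta_2).$$ Then the origin $\eta=0$ of the closed-loop system is globally asymptotically stable and locally exponentially stable, and $u(t)>0$ for all $t\ge0$ along every closed-loop solution.
   Context: $\phi_1(\eta_1)=\frac1{\lambda_1}(1-e^{-\eta_1})$, $\phi_2(\eta_2)=\lambda_2(e^{\eta_2}-1)$. *)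

From Stdlib Require Import Reals.
From Coquelicot Require Import Coquelicot.
Open Scope R_scope.

Definition phi1 (l1 e1 : R) : R := (1 - exp (- e1)) / l1.
Definition phi2 (l2 e2 : R) : R := l2 * (exp e2 - 1).

Definition varphi (l1 l2 eps : R) (eta : R * R) : R :=
  phi1 l1 (fst eta) + (1 + eps) * phi2 l2 (snd eta).

Definition u_fb (l1 l2 ustar delta eps beta : R) (eta : R * R) : R :=
  ustar + eps * phi2 l2 (snd eta)
  + beta * varphi l1 l2 eps eta
      / sqrt (delta ^ 2 + (Rmin 0 (varphi l1 l2 eps eta)) ^ 2).

Definition cl_f1 (l1 l2 ustar delta eps beta : R) (eta : R * R) : R :=
  ustar - u_fb l1 l2 ustar delta eps beta eta - phi2 l2 (snd eta).
Definition cl_f2 (l1 l2 ustar delta eps beta : R) (eta : R * R) : R :=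
  ustar - u_fb l1 l2 ustar delta eps beta eta + phi1 l1 (fst eta).

Definition norm2 (p : R * R) : R := sqrt (fst p ^ 2 + snd p ^ 2).

Definition is_solution (F1 F2 : R * R -> R) (x : R -> R * R) : Prop :=
  filterlim (fun t => fst (x t)) (at_right 0) (locally (fst (x 0))) /\
  filterlim (fun t => snd (x t)) (at_right 0) (locally (snd (x 0))) /\
  (forall t, 0 < t ->
     is_derive (fun s => fst (x s)) t (F1 (x t)) /\
     is_derive (fun s => snd (x s)) t (F2 (x t))).

Definition forward_complete (F1 F2 : R * R -> R) : Prop :=
  forall x0 : R * R, exists x, is_solution F1 F2 x /\ x 0 = x0.

Definition lyap_stable (F1 F2 : R * R -> R) : Prop :=
  forall e, 0 < e -> exists d, 0 < d /\
    forall x, is_solution F1 F2 x -> norm2 (x 0) < d ->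
      forall t, 0 <= t -> norm2 (x t) < e.

Definition glob_attractive (F1 F2 : R * R -> R) : Prop :=
  forall x, is_solution F1 F2 x -> is_lim (fun t => norm2 (x t)) p_infty 0.

Definition GAS (F1 F2 : R * R -> R) : Prop :=
  F1 (0, 0) = 0 /\ F2 (0, 0) = 0 /\
  forward_complete F1 F2 /\ lyap_stable F1 F2 /\ glob_attractive F1 F2.

Definition LES (F1 F2 : R * R -> R) : Prop :=
  exists r k c, 0 < r /\ 0 < k /\ 0 < c /\
    forall x, is_solution F1 F2 x -> norm2 (x 0) < r ->
      forall t, 0 <= t -> norm2 (x t) <= k * exp (- c * t) * norm2 (x 0).

From Stdlib Require Import Reals Lra Psatz.
From Coquelicot Require Import Coquelicot.
Open Scope R_scope.

(** With [V(a, b) = (a + e^(-a) - 1) / l1 + (1 + eps) l2 (e^b - 1 - b)], the derivative along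
    the closed loop is [- eps (1 + eps) phi2(b)^2 - beta s(varphi) varphi <= 0], where [s] is
    the saturation in the feedback, and the sublevel sets of [V] are bounded.  Hence every
    solution is bounded, and solutions exist for all time: Picard iteration applies to a
    globally Lipschitz cut-off of the vector field that agrees with it on a box containing the
    relevant sublevel set.  On a bounded box [phi1] and [phi2] are sector bounded
    ([k x^2 <= x phi(x) <= K x^2]), and adding a small cross term [ka (a^2 / 2 - a b)] to [V]
    gives a function comparable to [a^2 + b^2] whose derivative is at most [- c (a^2 + b^2)].
    This gives exponential decay from every bounded set of initial states, hence local
    exponential stability and, with boundedness, global attractivity.  Finally [u > 0] since
    [phi2 > - l2], [s > -1] and [eps l2 + beta < ustar]. *)

(** * Calculus on the real line *)

Lemma is_derive_continuous (f : R -> R) x l : is_derive f x l -> continuous f x.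
Proof. intro H. apply (ex_derive_continuous (V := R_NormedModule)). now exists l. Qed.

Lemma le_of_derive_nonneg (f df : R -> R) a b : a <= b ->
  (forall x, a <= x <= b -> is_derive f x (df x)) ->
  (forall x, a <= x <= b -> 0 <= df x) -> f a <= f b.
Proof.
  intros Hab Hd Hp.
  destruct (MVT_gen f a b df) as [c [Hc E]]; rewrite ?Rmin_left, ?Rmax_right in * by lra.
  - intros x Hx; apply Hd; lra.
  - intros x Hx; apply continuity_pt_filterlim, (is_derive_continuous _ _ (df x)), Hd; lra.
  - assert (0 <= df c) by (apply Hp; lra). nra.
Qed.

Lemma Rabs_sub_le_of_derive (f df : R -> R) a b K :
  (forall x, Rmin a b <= x <= Rmax a b -> is_derive f x (df x) /\ Rabs (df x) <= K) ->
  Rabs (f b - f a) <= K * Rabs (b - a).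
Proof.
  intros H. destruct (MVT_gen f a b df) as [c [Hc E]].
  - intros x Hx. apply H. lra.
  - intros x Hx. apply continuity_pt_filterlim, (is_derive_continuous _ _ (df x)), H. lra.
  - rewrite E, Rabs_mult. apply Rmult_le_compat_r; [apply Rabs_pos | apply H; lra].
Qed.

Lemma le_at_right0_of_derive_nonpos (g dg : R -> R) :
  filterlim g (at_right 0) (locally (g 0)) ->
  (forall t, 0 < t -> is_derive g t (dg t)) ->
  (forall t, 0 < t -> dg t <= 0) ->
  forall t, 0 <= t -> g t <= g 0.
Proof.
  intros Hc Hd Hn t Ht.
  destruct (Req_dec t 0) as [-> | Ht0]; [lra |].
  assert (Hst : forall s, 0 < s <= t -> g t <= g s).
  { intros s Hs. apply Ropp_le_cancel.
    apply (le_of_derive_nonneg (fun u => - g u) (fun u => - dg u)); [lra | |].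
    - intros x Hx. apply (is_derive_opp g). apply Hd. lra.
    - intros x Hx. assert (dg x <= 0) by (apply Hn; lra). lra. }
  apply (filterlim_le (F := at_right 0) (fun _ => g t) g (g t) (g 0));
    [| apply filterlim_const | exact Hc].
  exists (mkposreal t ltac:(lra)). intros s Hs Hs0. apply Hst. split; [exact Hs0 |].
  change (Rabs (s - 0) < t) in Hs. apply Rabs_def2 in Hs. lra.
Qed.

Lemma exp_decay_of_derive_le (w dw : R -> R) c :
  filterlim w (at_right 0) (locally (w 0)) ->
  (forall t, 0 < t -> is_derive w t (dw t)) ->
  (forall t, 0 < t -> dw t <= - c * w t) ->
  forall t, 0 <= t -> w t <= w 0 * exp (- c * t).
Proof.
  intros Hc Hd Hi t Ht.
  assert (Hexp : forall s, is_derive (fun t => exp (c * t)) s (c * exp (c * s))).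
  { intro s. auto_derive; [exact I | ring]. }
  assert (Hmono : forall t, 0 <= t -> w t * exp (c * t) <= w 0 * exp (c * 0)).
  { apply (le_at_right0_of_derive_nonpos (fun t => w t * exp (c * t))
             (fun t => dw t * exp (c * t) + w t * (c * exp (c * t)))).
    - eapply filterlim_comp_2;
        [exact Hc | | exact (@filterlim_mult R_AbsRing (w 0) (exp (c * 0)))].
      eapply filterlim_filter_le_1; [apply filter_le_within |].
      apply (is_derive_continuous _ _ _ (Hexp 0)).
    - intros s Hs. exact (is_derive_mult w _ s _ _ (Hd s Hs) (Hexp s) Rmult_comm).
    - intros s Hs. pose proof (Hi s Hs). pose proof (exp_pos (c * s)). nra. }
  specialize (Hmono t Ht). rewrite Rmult_0_r, exp_0, Rmult_1_r in Hmono.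
  replace (w t) with (w t * exp (c * t) * exp (- c * t)).
  - apply Rmult_le_compat_r; [left; apply exp_pos | exact Hmono].
  - rewrite Rmult_assoc, <- exp_plus. replace (c * t + - c * t) with 0 by ring.
    rewrite exp_0. ring.
Qed.

Lemma exp_le_exp x y : x <= y -> exp x <= exp y.
Proof. intros [H | ->]; [left; apply exp_increasing |]; lra. Qed.

Lemma exp_sub1_sector r y : Rabs y <= r ->
  exists th, / exp r <= th <= exp r /\ exp y - 1 = th * y.
Proof.
  intro Hy. apply Rabs_le_between in Hy.
  destruct (MVT_gen exp 0 y exp) as [c [Hc E]].
  - intros; apply is_derive_exp.
  - intros x _. apply continuity_pt_filterlim, (is_derive_continuous _ _ (exp x)), is_derive_exp.
  - exists (exp c). rewrite exp_0, Rminus_0_r in E. split; [| exact E].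
    rewrite <- exp_Ropp. unfold Rmin, Rmax in Hc.
    split; apply exp_le_exp; destruct (Rle_dec 0 y); lra.
Qed.

Definition sector (r k K : R) (g : R -> R) :=
  forall x, Rabs x <= r -> exists th, k <= th <= K /\ g x = th * x.

Lemma le_at0_of_derive_sign (f df : R -> R) r z : Rabs z <= r ->
  (forall x, Rabs x <= r -> is_derive f x (df x)) ->
  (forall x, Rabs x <= r -> exists c, 0 <= c /\ df x = c * x) -> f 0 <= f z.
Proof.
  intros Hz Hd Hs. apply Rabs_le_between in Hz.
  destruct (Rle_or_lt 0 z) as [Hz0 | Hz0].
  - apply (le_of_derive_nonneg f df); [exact Hz0 | |].
    + intros x Hx. apply Hd, Rabs_le_between. lra.
    + intros x Hx. destruct (Hs x ltac:(apply Rabs_le_between; lra)) as [c [Hc ->]]. nra.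
  - apply Ropp_le_cancel, (le_of_derive_nonneg (fun x => - f x) (fun x => - df x)); [lra | |].
    + intros x Hx. apply (is_derive_opp f), Hd, Rabs_le_between. lra.
    + intros x Hx. destruct (Hs x ltac:(apply Rabs_le_between; lra)) as [c [Hc ->]]. nra.
Qed.

Lemma quadratic_bounds_of_sector (h g : R -> R) r k K z :
  Rabs z <= r -> h 0 = 0 ->
  (forall x, Rabs x <= r -> is_derive h x (g x)) -> sector r k K g ->
  k * z ^ 2 / 2 <= h z <= K * z ^ 2 / 2.
Proof.
  intros Hz H0 Hd Hg. split.
  - enough (h 0 - k * 0 ^ 2 / 2 <= h z - k * z ^ 2 / 2) by (rewrite H0 in H; lra).
    apply (le_at0_of_derive_sign (fun x => h x - k * x ^ 2 / 2) (fun x => g x - k * x) r);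
      [exact Hz | |].
    + intros x Hx. apply (is_derive_minus h (fun x => k * x ^ 2 / 2)); [now apply Hd |].
      auto_derive; [exact I | field].
    + intros x Hx. destruct (Hg x Hx) as [th [Hth ->]]. exists (th - k). split; [lra | ring].
  - enough (K * 0 ^ 2 / 2 - h 0 <= K * z ^ 2 / 2 - h z) by (rewrite H0 in H; lra).
    apply (le_at0_of_derive_sign (fun x => K * x ^ 2 / 2 - h x) (fun x => K * x - g x) r);
      [exact Hz | |].
    + intros x Hx. apply (is_derive_minus (fun x => K * x ^ 2 / 2) h); [| now apply Hd].
      auto_derive; [exact I | field].
    + intros x Hx. destruct (Hg x Hx) as [th [Hth ->]]. exists (K - th). split; [lra | ring].
Qed.

Lemma exp_ge_twice y : 0 <= y -> 2 * y <= exp y.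
Proof.
  intro Hy. replace y with (y / 2 + y / 2) at 2 by field. rewrite exp_plus.
  pose proof (exp_ineq1_le (y / 2)).
  assert ((1 + y / 2) * (1 + y / 2) <= exp (y / 2) * exp (y / 2))
    by (apply Rmult_le_compat; lra).
  pose proof (pow2_ge_0 (1 - y / 2)). nra.
Qed.

Lemma sqrt_decay_of_quadratic_lyapunov (w dw N : R -> R) m M c :
  0 < m -> 0 < M -> 0 < c ->
  filterlim w (at_right 0) (locally (w 0)) ->
  (forall t, 0 < t -> is_derive w t (dw t)) ->
  (forall t, 0 <= t -> 0 <= N t /\ m * N t <= w t <= M * N t) ->
  (forall t, 0 < t -> dw t <= - c * N t) ->
  forall t, 0 <= t -> sqrt (N t) <= sqrt (M / m) * exp (- (c / M / 2) * t) * sqrt (N 0).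
Proof.
  intros Hm HM Hc Hw0 Hd HN Hdw t Ht.
  assert (Hdecay := exp_decay_of_derive_le w dw (c / M) Hw0 Hd).
  destruct (HN 0 (Rle_refl 0)) as [HN0 [_ Hw0u]]. destruct (HN t Ht) as [HNt [Hwtl _]].
  set (e := exp (- (c / M) * t)).
  assert (He : 0 < e) by apply exp_pos.
  assert (Hwt : w t <= w 0 * e).
  { apply Hdecay; [| exact Ht]. intros s Hs.
    destruct (HN s (Rlt_le _ _ Hs)) as [_ [_ Hws]].
    assert (c / M * w s <= c / M * (M * N s))
      by (apply Rmult_le_compat_l; [apply Rdiv_le_0_compat |]; lra).
    replace (c / M * (M * N s)) with (c * N s) in H by (field; lra).
    pose proof (Hdw s Hs). lra. }
  assert (HNt' : N t <= M / m * e * N 0).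
  { apply (Rmult_le_reg_l m); [exact Hm |].
    replace (m * (M / m * e * N 0)) with (M * N 0 * e) by (field; lra).
    assert (w 0 * e <= M * N 0 * e) by (apply Rmult_le_compat_r; lra). lra. }
  replace (exp (- (c / M / 2) * t)) with (sqrt e).
  - assert (HMm : 0 <= M / m) by (apply Rdiv_le_0_compat; lra).
    rewrite <- sqrt_mult_alt, <- sqrt_mult_alt
      by first [exact HMm | apply Rmult_le_pos; [exact HMm | lra]].
    apply sqrt_le_1_alt. exact HNt'.
  - unfold e. replace (- (c / M) * t) with (- (c / M / 2) * t + - (c / M / 2) * t)
      by (field; lra).
    rewrite exp_plus. apply sqrt_square. left; apply exp_pos.
Qed.

Lemma lipschitz_glue_at0 (f : R -> R) K :
  (forall x y, 0 <= x -> 0 <= y -> Rabs (f x - f y) <= K * Rabs (x - y)) ->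
  (forall x y, x <= 0 -> y <= 0 -> Rabs (f x - f y) <= K * Rabs (x - y)) ->
  forall x y, Rabs (f x - f y) <= K * Rabs (x - y).
Proof.
  intros Hp Hn.
  assert (Hmix : forall x y, 0 <= x -> y <= 0 -> Rabs (f x - f y) <= K * Rabs (x - y)).
  { intros x y Hx Hy.
    replace (f x - f y) with ((f x - f 0) + (f 0 - f y)) by ring.
    eapply Rle_trans; [apply Rabs_triang |].
    pose proof (Hp x 0 Hx (Rle_refl 0)). pose proof (Hn 0 y (Rle_refl 0) Hy).
    rewrite Rminus_0_r, (Rabs_pos_eq x) in H by exact Hx.
    rewrite Rminus_0_l, Rabs_Ropp, (Rabs_left1 y) in H0 by exact Hy.
    rewrite (Rabs_pos_eq (x - y)) by lra. lra. }
  intros x y. destruct (Rle_or_lt 0 x), (Rle_or_lt 0 y); auto with real.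
  rewrite <- Rabs_Ropp, Ropp_minus_distr, <- (Rabs_Ropp (x - y)), Ropp_minus_distr.
  apply Hmix; lra.
Qed.

(* The factor of [beta] in the feedback [u_fb]. *)
Definition sat (d p : R) : R := p / sqrt (d ^ 2 + (Rmin 0 p) ^ 2).

Section Saturation.
Variable d : R.
Hypothesis Hd : 0 < d.

Lemma le_sqrt_sq_plus p : d <= sqrt (d ^ 2 + p ^ 2).
Proof.
  rewrite <- (sqrt_pow2 d) at 1 by lra. apply sqrt_le_1_alt.
  pose proof (pow2_ge_0 p). lra.
Qed.

Lemma sat_nonneg p : 0 <= p -> sat d p = p / d.
Proof.
  intro Hp. unfold sat. rewrite Rmin_left, pow_i, Rplus_0_r, sqrt_pow2 by lia || lra.
  reflexivity.
Qed.

Lemma sat_nonpos p : p <= 0 -> sat d p = p / sqrt (d ^ 2 + p ^ 2).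
Proof. intro Hp. unfold sat. now rewrite Rmin_right. Qed.

Lemma sat_gt_m1 p : -1 < sat d p.
Proof.
  destruct (Rle_or_lt 0 p) as [Hp | Hp].
  - rewrite sat_nonneg by exact Hp. pose proof (Rdiv_le_0_compat p d Hp Hd). lra.
  - rewrite sat_nonpos by lra.
    assert (Hq : - p < sqrt (d ^ 2 + p ^ 2)).
    { rewrite <- (sqrt_pow2 (- p)) by lra. apply sqrt_lt_1_alt. nra. }
    pose proof (le_sqrt_sq_plus p).
    apply Rmult_lt_reg_r with (sqrt (d ^ 2 + p ^ 2)); [lra |].
    unfold Rdiv. rewrite Rmult_assoc, Rinv_l by lra. lra.
Qed.

Lemma sat_sq_le p : d * sat d p ^ 2 <= sat d p * p.
Proof.
  unfold sat. set (q := sqrt (d ^ 2 + (Rmin 0 p) ^ 2)).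
  assert (Hq : d <= q) by apply le_sqrt_sq_plus.
  replace (d * (p / q) ^ 2) with (d / q * (p ^ 2 / q)) by (field; lra).
  replace (p / q * p) with (p ^ 2 / q) by (field; lra).
  assert (0 <= p ^ 2 / q) by (apply Rdiv_le_0_compat; [apply pow2_ge_0 | lra]).
  assert (d / q <= 1).
  { apply Rmult_le_reg_r with q; [lra |]. unfold Rdiv. rewrite Rmult_assoc, Rinv_l; lra. }
  nra.
Qed.

Lemma sat_lipschitz p q : Rabs (sat d p - sat d q) <= / d * Rabs (p - q).
Proof.
  revert p q. apply lipschitz_glue_at0.
  - intros p q Hp Hq. rewrite !sat_nonneg by lra.
    replace (p / d - q / d) with (/ d * (p - q)) by (field; lra).
    rewrite Rabs_mult, Rabs_pos_eq; [lra | left; apply Rinv_0_lt_compat, Hd].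
  - intros p q Hp Hq. rewrite !sat_nonpos by lra.
    apply (Rabs_sub_le_of_derive (fun x => x / sqrt (d ^ 2 + x ^ 2))
             (fun x => d ^ 2 / ((d ^ 2 + x ^ 2) * sqrt (d ^ 2 + x ^ 2)))).
    intros x _.
    assert (Hs : d <= sqrt (d ^ 2 + x ^ 2)) by apply le_sqrt_sq_plus.
    assert (Hx2 : 0 <= x ^ 2) by apply pow2_ge_0.
    split.
    + auto_derive; replace (d * (d * 1) + x * (x * 1)) with (d ^ 2 + x ^ 2) by ring.
      * split; [nra | split; [apply Rgt_not_eq; lra | exact I]].
      * rewrite sqrt_sqrt by nra. field. split; apply Rgt_not_eq; nra.
    + set (S := sqrt (d ^ 2 + x ^ 2)) in *.
      assert (HQ : d ^ 2 * d <= (d ^ 2 + x ^ 2) * S) by (apply Rmult_le_compat; nra).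
      assert (Hd3 : 0 < d ^ 2 * d) by (apply Rmult_lt_0_compat; nra).
      rewrite Rabs_pos_eq by (apply Rdiv_le_0_compat; [apply pow2_ge_0 | lra]).
      replace (/ d) with (d ^ 2 * / (d ^ 2 * d)) by (field; lra).
      apply Rmult_le_compat_l; [apply pow2_ge_0 | apply Rinv_le_contravar; lra].
Qed.

End Saturation.

(** * Existence of solutions by Picard iteration *)

Lemma continuous_of_lipschitz (f : R -> R) K :
  (forall t s, Rabs (f t - f s) <= K * Rabs (t - s)) -> forall t, continuous f t.
Proof.
  intros H t. apply continuity_pt_filterlim. intros e He.
  exists (e / (Rabs K + 1)).
  pose proof (Rabs_pos K).
  split; [apply Rdiv_lt_0_compat; lra |].
  intros x [_ Hx]. simpl in *. unfold R_dist in *.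
  eapply Rle_lt_trans; [apply H |].
  apply (Rle_lt_trans _ (Rabs K * Rabs (x - t)));
    [apply Rmult_le_compat_r; [apply Rabs_pos | apply Rle_abs] |].
  apply (Rle_lt_trans _ (Rabs K * (e / (Rabs K + 1)))); [apply Rmult_le_compat_l; lra |].
  apply (Rmult_lt_reg_r (Rabs K + 1)); [lra |].
  replace (Rabs K * (e / (Rabs K + 1)) * (Rabs K + 1)) with (Rabs K * e) by (field; lra).
  nra.
Qed.

Lemma ex_RInt_of_lipschitz (f : R -> R) K a b :
  (forall t s, Rabs (f t - f s) <= K * Rabs (t - s)) -> ex_RInt f a b.
Proof.
  intro H. apply (ex_RInt_continuous (V := R_CompleteNormedModule)).
  intros z _. exact (continuous_of_lipschitz f K H z).
Qed.

Lemma Rabs_RInt_le_const (f : R -> R) a b M : ex_RInt f a b ->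
  (forall x, Rmin a b <= x <= Rmax a b -> Rabs (f x) <= M) ->
  Rabs (RInt f a b) <= M * Rabs (b - a).
Proof.
  intros He H. destruct (Rle_or_lt a b) as [Hab | Hab].
  - rewrite (Rabs_pos_eq (b - a)), Rmult_comm by lra. apply abs_RInt_le_const; auto.
    intros t Ht. apply H. rewrite Rmin_left, Rmax_right; lra.
  - rewrite <- opp_RInt_swap by (apply ex_RInt_swap; auto). unfold opp. simpl.
    rewrite Rabs_Ropp, (Rabs_left (b - a)), Rmult_comm by lra.
    replace (- (b - a)) with (a - b) by ring.
    apply abs_RInt_le_const; [lra | apply ex_RInt_swap; auto |].
    intros t Ht. apply H. rewrite Rmin_right, Rmax_left; lra.
Qed.

Lemma Rabs_RInt_le (f g : R -> R) a b : a <= b -> ex_RInt f a b -> ex_RInt g a b ->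
  (forall x, a <= x <= b -> Rabs (f x) <= g x) -> Rabs (RInt f a b) <= RInt g a b.
Proof.
  intros Hab Hf Hg H. apply Rabs_le_between. split.
  - assert (E : RInt (fun x => - g x) a b = - RInt g a b) by exact (RInt_opp g a b Hg).
    rewrite <- E. apply RInt_le; auto; [exact (ex_RInt_opp g a b Hg) |].
    intros x Hx. specialize (H x ltac:(lra)). apply Rabs_le_between in H. lra.
  - apply RInt_le; auto. intros x Hx. specialize (H x ltac:(lra)).
    apply Rabs_le_between in H. lra.
Qed.

Lemma RInt_scal_exp C k T : 0 < k ->
  RInt (fun s => C * exp (k * s)) 0 T = C * (exp (k * T) - 1) / k.
Proof.
  intro Hk. apply is_RInt_unique.
  replace (C * (exp (k * T) - 1) / k) with (minus (C * exp (k * T) / k) (C * exp (k * 0) / k))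
    by (unfold minus, plus, opp; simpl; rewrite Rmult_0_r, exp_0; field; lra).
  apply (is_RInt_derive (fun s => C * exp (k * s) / k)).
  - intros x _. auto_derive; [exact I | field; lra].
  - intros x _. apply (ex_derive_continuous (V := R_NormedModule)). auto_derive. exact I.
Qed.

Lemma ex_RInt_scal_exp C k a b : ex_RInt (fun s => C * exp (k * s)) a b.
Proof.
  apply (ex_RInt_continuous (V := R_CompleteNormedModule)). intros z _.
  apply (ex_derive_continuous (V := R_NormedModule)). auto_derive. exact I.
Qed.

Lemma Rabs_le_of_is_lim_seq (u : nat -> R) (l c : R) :
  is_lim_seq u l -> (forall n, Rabs (u n) <= c) -> Rabs l <= c.
Proof.
  intros H Hb.
  assert (Hle : Rbar_le (Rabs l) c)
    by (eapply is_lim_seq_le; [exact Hb | apply (is_lim_seq_abs u l H) | apply is_lim_seq_const]).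
  exact Hle.
Qed.

Lemma eq_0_of_geometric_bound a K : (forall n, Rabs a <= K * (/ 2) ^ n) -> a = 0.
Proof.
  intro H. apply Rabs_eq_0, Rle_antisym; [| apply Rabs_pos].
  assert (Hl : is_lim_seq (fun n => K * (/ 2) ^ n) 0).
  { replace (Finite 0) with (Rbar_mult K 0) by (simpl; f_equal; ring).
    apply is_lim_seq_scal_l, is_lim_seq_geom. rewrite Rabs_pos_eq; lra. }
  assert (Hle : Rbar_le (Rabs a) 0)
    by (eapply is_lim_seq_le; [exact H | apply is_lim_seq_const | exact Hl]).
  exact Hle.
Qed.

Lemma ex_lim_seq_of_geometric_tail (u : nat -> R) C : 0 <= C ->
  (forall n k, Rabs (u (n + k)%nat - u n) <= C * (/ 2) ^ n) -> ex_finite_lim_seq u.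
Proof.
  intros HC H. apply ex_lim_seq_cauchy_corr. intro e.
  destruct (pow_lt_1_zero (/ 2)) with (y := e / (2 * C + 1)) as [N HN].
  { rewrite Rabs_pos_eq; lra. }
  { apply Rdiv_lt_0_compat; [apply cond_pos | lra]. }
  exists N. intros n m Hn Hm.
  specialize (HN N (Nat.le_refl N)). rewrite Rabs_pos_eq in HN by (apply pow_le; lra).
  pose proof (H N (n - N)%nat) as Hn'. pose proof (H N (m - N)%nat) as Hm'.
  replace (N + (n - N))%nat with n in Hn' by lia. replace (N + (m - N))%nat with m in Hm' by lia.
  replace (u n - u m) with ((u n - u N) - (u m - u N)) by ring.
  eapply Rle_lt_trans; [apply Rabs_triang | rewrite Rabs_Ropp].
  assert (C * (/ 2) ^ N <= C * (e / (2 * C + 1))) by (apply Rmult_le_compat_l; lra).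
  assert (2 * (C * (e / (2 * C + 1))) < e).
  { replace (2 * (C * (e / (2 * C + 1)))) with (e * (2 * C / (2 * C + 1))) by (field; lra).
    pose proof (cond_pos e).
    assert (2 * C / (2 * C + 1) < 1).
    { apply (Rmult_lt_reg_r (2 * C + 1)); [lra |].
      unfold Rdiv. rewrite Rmult_assoc, Rinv_l; lra. }
    nra. }
  lra.
Qed.

Lemma Rabs_Rmax0_sub t s : Rabs (Rmax 0 t - Rmax 0 s) <= Rabs (t - s).
Proof.
  unfold Rmax. destruct (Rle_dec 0 t), (Rle_dec 0 s); unfold Rabs;
    repeat destruct Rcase_abs; lra.
Qed.

Lemma is_derive_const_plus_RInt (g : R -> R) c t :
  (forall a b, ex_RInt g a b) -> continuous g t ->
  is_derive (fun s => c + RInt g 0 s) t (g t).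
Proof.
  intros He Hc. replace (g t) with (0 + g t) by ring.
  apply (is_derive_plus (fun _ => c));
    [apply (is_derive_const (K := R_AbsRing) (V := R_NormedModule)) |].
  apply (is_derive_RInt g (fun s => RInt g 0 s) 0 t); [| exact Hc].
  apply filter_forall. intro b. apply (RInt_correct (V := R_CompleteNormedModule)), He.
Qed.

Lemma RInt_sub_RInt (f : R -> R) a b c : ex_RInt f a c -> ex_RInt f c b ->
  RInt f a b - RInt f a c = RInt f c b.
Proof. intros H1 H2. rewrite <- (RInt_Chasles f a c b H1 H2). unfold plus. simpl. ring. Qed.

(* Points of the plane are functions [bool -> R], [true] indexing the first coordinate. *)
Definition dist1 (z w : bool -> R) := Rabs (z true - w true) + Rabs (z false - w false).

Section Picard.
Variables (G : bool -> (bool -> R) -> R) (L M : R) (z0 : bool -> R).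
Hypotheses (HL : 0 < L) (HM : 0 <= M)
  (HG_lip : forall i z w, Rabs (G i z - G i w) <= L * dist1 z w)
  (HG_bnd : forall i z, Rabs (G i z) <= M).

Definition state (Z : bool -> R -> R) (s : R) : bool -> R := fun j => Z j s.

(* The iterates are frozen at [z0] for negative times. *)
Fixpoint picard (n : nat) : bool -> R -> R :=
  match n with
  | O => fun i _ => z0 i
  | S n => fun i t => z0 i + RInt (fun s => G i (state (picard n) s)) 0 (Rmax 0 t)
  end.

Lemma G_state_lipschitz (Z : bool -> R -> R) K i :
  (forall j t s, Rabs (Z j t - Z j s) <= K * Rabs (t - s)) ->
  forall t s, Rabs (G i (state Z t) - G i (state Z s)) <= 2 * L * K * Rabs (t - s).
Proof.
  intros HZ t s. eapply Rle_trans; [apply HG_lip |]. unfold dist1, state.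
  pose proof (HZ true t s). pose proof (HZ false t s).
  replace (2 * L * K * Rabs (t - s)) with (L * (K * Rabs (t - s) + K * Rabs (t - s))) by ring.
  apply Rmult_le_compat_l; lra.
Qed.

Lemma picard_lipschitz n : forall j t s, Rabs (picard n j t - picard n j s) <= M * Rabs (t - s).
Proof.
  induction n as [| n IH]; intros j t s; simpl.
  - rewrite Rminus_diag, Rabs_R0. apply Rmult_le_pos; [exact HM | apply Rabs_pos].
  - set (g := fun s => G j (state (picard n) s)).
    assert (Hint : forall a b, ex_RInt g a b)
      by (intros; apply (ex_RInt_of_lipschitz _ _ _ _ (G_state_lipschitz _ _ j IH))).
    assert (E : z0 j + RInt g 0 (Rmax 0 t) - (z0 j + RInt g 0 (Rmax 0 s))
                = RInt g (Rmax 0 s) (Rmax 0 t)).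
    { rewrite <- (RInt_sub_RInt g 0 (Rmax 0 t) (Rmax 0 s)) by apply Hint. ring. }
    rewrite E.
    eapply Rle_trans; [apply Rabs_RInt_le_const; [apply Hint | intros; apply HG_bnd] |].
    apply Rmult_le_compat_l; [exact HM | apply Rabs_Rmax0_sub].
Qed.

Lemma ex_RInt_picard n i a b : ex_RInt (fun s => G i (state (picard n) s)) a b.
Proof. exact (ex_RInt_of_lipschitz _ _ _ _ (G_state_lipschitz _ _ i (picard_lipschitz n))). Qed.

(* With this weight a Picard step contracts by [1/2], since
   [L * RInt (fun s => exp (4 L s)) 0 t <= exp (4 L t) / 4]. *)
Definition picard_weight t := M / L * exp (4 * L * Rmax 0 t).

Lemma picard_weight_nonneg t : 0 <= picard_weight t.
Proof.
  unfold picard_weight. apply Rmult_le_pos; [apply Rdiv_le_0_compat; lra | left; apply exp_pos].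
Qed.

Lemma picard_weight_le s t : 0 <= s <= t -> picard_weight s <= picard_weight t.
Proof.
  intro H. unfold picard_weight. apply Rmult_le_compat_l; [apply Rdiv_le_0_compat; lra |].
  apply exp_le_exp. rewrite !Rmax_right by lra. nra.
Qed.

Lemma picard_first_step t : dist1 (state (picard 1) t) (state (picard 0) t) <= picard_weight t.
Proof.
  set (T := Rmax 0 t). assert (HT : 0 <= T) by apply Rmax_l. unfold dist1, state.
  assert (Hi : forall i, Rabs (picard 1 i t - picard 0 i t) <= M * T).
  { intro i.
    assert (E : picard 1 i t - picard 0 i t = RInt (fun s => G i (state (picard 0) s)) 0 T)
      by (simpl; fold T; ring).
    rewrite E. eapply Rle_trans;
      [apply Rabs_RInt_le_const; [apply ex_RInt_picard | intros; apply HG_bnd] |].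
    rewrite Rminus_0_r, Rabs_pos_eq by exact HT. lra. }
  pose proof (Hi true). pose proof (Hi false).
  unfold picard_weight. fold T.
  pose proof (exp_ineq1_le (4 * L * T)).
  assert (M / L * (4 * L * T) <= M / L * exp (4 * L * T))
    by (apply Rmult_le_compat_l; [apply Rdiv_le_0_compat |]; lra).
  replace (M / L * (4 * L * T)) with (4 * (M * T)) in H2 by (field; lra).
  assert (0 <= M * T) by (apply Rmult_le_pos; lra). lra.
Qed.

Lemma picard_step n t :
  dist1 (state (picard (S n)) t) (state (picard n) t) <= picard_weight t * (/ 2) ^ n.
Proof.
  revert t. induction n as [| n IH]; intro t; [rewrite Rmult_1_r; apply picard_first_step |].
  set (T := Rmax 0 t). assert (HT : 0 <= T) by apply Rmax_l. unfold dist1, state.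
  assert (Hi : forall i, Rabs (picard (S (S n)) i t - picard (S n) i t)
                         <= M * (/ 2) ^ n * (exp (4 * L * T) - 1) / (4 * L)).
  { intro i. set (g1 := fun s => G i (state (picard (S n)) s)).
    set (g0 := fun s => G i (state (picard n) s)).
    assert (E : picard (S (S n)) i t - picard (S n) i t = RInt (fun s => g1 s - g0 s) 0 T).
    { change (picard (S (S n)) i t) with (z0 i + RInt g1 0 T).
      change (picard (S n) i t) with (z0 i + RInt g0 0 T).
      rewrite (RInt_minus g1 g0) by apply ex_RInt_picard.
      unfold minus, plus, opp. simpl. ring. }
    rewrite E, <- RInt_scal_exp by lra.
    apply Rabs_RInt_le;
      [exact HT | exact (ex_RInt_minus g1 g0 0 T (ex_RInt_picard _ _ _ _) (ex_RInt_picard _ _ _ _))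
      | apply ex_RInt_scal_exp |].
    intros s Hs. eapply Rle_trans; [apply HG_lip |].
    eapply Rle_trans; [apply Rmult_le_compat_l; [lra | apply IH] |].
    unfold picard_weight. rewrite Rmax_right by lra. apply Req_le. field. lra. }
  pose proof (Hi true). pose proof (Hi false).
  unfold picard_weight. fold T. simpl pow.
  assert (0 <= M * (/ 2) ^ n) by (apply Rmult_le_pos; [lra | apply pow_le; lra]).
  assert (E : M / L * exp (4 * L * T) * (/ 2 * (/ 2) ^ n)
              - 2 * (M * (/ 2) ^ n * (exp (4 * L * T) - 1) / (4 * L))
              = M * (/ 2) ^ n / (2 * L)) by (field; lra).
  assert (0 <= M * (/ 2) ^ n / (2 * L)) by (apply Rdiv_le_0_compat; lra).
  lra.
Qed.

Lemma picard_tail n k j t :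
  Rabs (picard (n + k) j t - picard n j t) <= 2 * picard_weight t * (/ 2) ^ n.
Proof.
  enough (H : dist1 (state (picard (n + k)) t) (state (picard n) t)
              <= 2 * picard_weight t * ((/ 2) ^ n - (/ 2) ^ (n + k))).
  { assert (0 <= 2 * picard_weight t * (/ 2) ^ (n + k))
      by (apply Rmult_le_pos; [pose proof (picard_weight_nonneg t); lra | apply pow_le; lra]).
    unfold dist1, state in H.
    pose proof (Rabs_pos (picard (n + k) true t - picard n true t)).
    pose proof (Rabs_pos (picard (n + k) false t - picard n false t)).
    destruct j; lra. }
  induction k as [| k IH].
  - rewrite Nat.add_0_r. unfold dist1, state. rewrite !Rminus_diag, Rabs_R0. lra.
  - rewrite Nat.add_succ_r. pose proof (picard_step (n + k) t).
    unfold dist1, state in *.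
    assert (T : forall j, Rabs (picard (S (n + k)) j t - picard n j t)
                  <= Rabs (picard (S (n + k)) j t - picard (n + k) j t)
                     + Rabs (picard (n + k) j t - picard n j t)).
    { intro j'. eapply Rle_trans; [| apply Rabs_triang]. right. f_equal. ring. }
    pose proof (T true). pose proof (T false). simpl pow. lra.
Qed.

Definition picard_lim j t := real (Lim_seq (fun n => picard n j t)).

Lemma picard_lim_correct j t : is_lim_seq (fun n => picard n j t) (picard_lim j t).
Proof.
  apply Lim_seq_correct', (ex_lim_seq_of_geometric_tail _ (2 * picard_weight t)).
  - pose proof (picard_weight_nonneg t). lra.
  - intros; apply picard_tail.
Qed.

Lemma picard_lim_near n j t :
  Rabs (picard_lim j t - picard n j t) <= 2 * picard_weight t * (/ 2) ^ n.
Proof.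
  apply (Rabs_le_of_is_lim_seq (fun k => picard (k + n) j t - picard n j t)).
  - apply is_lim_seq_minus'; [| apply is_lim_seq_const].
    apply (is_lim_seq_incr_n (fun k => picard k j t) n), picard_lim_correct.
  - intro k. rewrite Nat.add_comm. apply picard_tail.
Qed.

Lemma picard_lim_lipschitz j t s : Rabs (picard_lim j t - picard_lim j s) <= M * Rabs (t - s).
Proof.
  apply (Rabs_le_of_is_lim_seq (fun n => picard n j t - picard n j s)).
  - apply is_lim_seq_minus'; apply picard_lim_correct.
  - intro n. apply picard_lipschitz.
Qed.

Lemma picard_lim_0 j : picard_lim j 0 = z0 j.
Proof.
  unfold picard_lim. rewrite (Lim_seq_ext _ (fun _ => z0 j)), Lim_seq_const; [reflexivity |].
  intros [| n]; [reflexivity |]. simpl. rewrite Rmax_left, RInt_point by lra.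
  unfold zero. simpl. ring.
Qed.

Lemma ex_RInt_picard_lim i a b : ex_RInt (fun s => G i (state picard_lim s)) a b.
Proof. exact (ex_RInt_of_lipschitz _ _ _ _ (G_state_lipschitz _ _ i picard_lim_lipschitz)). Qed.

Lemma picard_lim_integral j t : 0 <= t ->
  picard_lim j t = z0 j + RInt (fun s => G j (state picard_lim s)) 0 t.
Proof.
  intro Ht. set (g := fun s => G j (state picard_lim s)).
  cut (picard_lim j t - (z0 j + RInt g 0 t) = 0); [lra |].
  apply (eq_0_of_geometric_bound _ (picard_weight t + 4 * L * picard_weight t * t)). intro n.
  set (gn := fun s => G j (state (picard n) s)).
  assert (E : picard_lim j t - (z0 j + RInt g 0 t)
              = (picard_lim j t - picard (S n) j t) + RInt (fun s => gn s - g s) 0 t).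
  { change (picard (S n) j t) with (z0 j + RInt gn 0 (Rmax 0 t)).
    rewrite Rmax_right by exact Ht.
    assert (Em : RInt (fun s => gn s - g s) 0 t = RInt gn 0 t - RInt g 0 t)
      by exact (RInt_minus gn g 0 t (ex_RInt_picard n j 0 t) (ex_RInt_picard_lim j 0 t)).
    rewrite Em. ring. }
  rewrite E. eapply Rle_trans; [apply Rabs_triang |].
  pose proof (picard_lim_near (S n) j t) as Hnear. simpl pow in Hnear.
  assert (Hint : Rabs (RInt (fun s => gn s - g s) 0 t)
                 <= 4 * L * picard_weight t * (/ 2) ^ n * Rabs (t - 0)).
  { apply Rabs_RInt_le_const;
      [exact (ex_RInt_minus gn g 0 t (ex_RInt_picard n j 0 t) (ex_RInt_picard_lim j 0 t)) |].
    intros s Hs. rewrite Rmin_left, Rmax_right in Hs by lra.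
    unfold gn, g. eapply Rle_trans; [apply HG_lip |]. unfold dist1, state.
    pose proof (picard_lim_near n true s). pose proof (picard_lim_near n false s).
    rewrite <- Rabs_Ropp, Ropp_minus_distr in H, H0.
    pose proof (picard_weight_le s t Hs).
    assert (2 * picard_weight s * (/ 2) ^ n <= 2 * picard_weight t * (/ 2) ^ n)
      by (apply Rmult_le_compat_r; [apply pow_le |]; lra).
    replace (4 * L * picard_weight t * (/ 2) ^ n)
      with (L * (2 * picard_weight t * (/ 2) ^ n + 2 * picard_weight t * (/ 2) ^ n)) by ring.
    apply Rmult_le_compat_l; lra. }
  rewrite Rminus_0_r, (Rabs_pos_eq t) in Hint by exact Ht.
  assert (E2 : (picard_weight t + 4 * L * picard_weight t * t) * (/ 2) ^ n
               = 2 * picard_weight t * (/ 2 * (/ 2) ^ n) + 4 * L * picard_weight t * (/ 2) ^ n * t)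
    by field.
  rewrite E2. lra.
Qed.

Lemma picard_lim_derive j t : 0 < t -> is_derive (picard_lim j) t (G j (state picard_lim t)).
Proof.
  intro Ht.
  apply (is_derive_ext_loc (fun s => z0 j + RInt (fun s => G j (state picard_lim s)) 0 s)).
  - exists (mkposreal t Ht). intros s Hs. change (Rabs (s - t) < t) in Hs.
    apply Rabs_def2 in Hs. symmetry. apply picard_lim_integral. lra.
  - apply is_derive_const_plus_RInt; [apply ex_RInt_picard_lim |].
    exact (continuous_of_lipschitz _ _ (G_state_lipschitz _ _ j picard_lim_lipschitz) t).
Qed.

End Picard.

Theorem picard_existence (G : bool -> (bool -> R) -> R) L M (z0 : bool -> R) :
  0 < L -> 0 <= M ->
  (forall i z w, Rabs (G i z - G i w) <= L * dist1 z w) -> (forall i z, Rabs (G i z) <= M) ->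
  exists Z : bool -> R -> R, (forall j, Z j 0 = z0 j) /\ (forall j t, continuous (Z j) t) /\
    forall j t, 0 < t -> is_derive (Z j) t (G j (state Z t)).
Proof.
  intros HL HM Hlip Hbnd. exists (picard_lim G z0). split; [| split].
  - intro j. apply picard_lim_0.
  - intros j. apply (continuous_of_lipschitz _ M). intros; now apply (picard_lim_lipschitz G L).
  - intros j t Ht. now apply (picard_lim_derive G L M).
Qed.

(** * Cut-off vector fields *)

Definition box_lipschitz r (f : R -> R -> R) := exists K, 0 <= K /\
  forall a b a' b', Rabs a <= r -> Rabs b <= r -> Rabs a' <= r -> Rabs b' <= r ->
    Rabs (f a b - f a' b') <= K * (Rabs (a - a') + Rabs (b - b')).

Section BoxLipschitz.
Variable r : R.

Lemma box_lipschitz_ext (f g : R -> R -> R) :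
  (forall a b, f a b = g a b) -> box_lipschitz r f -> box_lipschitz r g.
Proof.
  intros E [K [HK H]]. exists K. split; [exact HK |]. intros. rewrite <- !E. auto.
Qed.

Lemma box_lipschitz_plus (f g : R -> R -> R) :
  box_lipschitz r f -> box_lipschitz r g -> box_lipschitz r (fun a b => f a b + g a b).
Proof.
  intros [K [HK Hf]] [K' [HK' Hg]]. exists (K + K'). split; [lra |].
  intros a b a' b' Ha Hb Ha' Hb'.
  replace (f a b + g a b - (f a' b' + g a' b'))
    with ((f a b - f a' b') + (g a b - g a' b')) by ring.
  eapply Rle_trans; [apply Rabs_triang |].
  pose proof (Hf a b a' b' Ha Hb Ha' Hb'). pose proof (Hg a b a' b' Ha Hb Ha' Hb'). lra.
Qed.

Lemma box_lipschitz_comp (h : R -> R) K (f : R -> R -> R) : 0 <= K ->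
  (forall x y, Rabs (h x - h y) <= K * Rabs (x - y)) ->
  box_lipschitz r f -> box_lipschitz r (fun a b => h (f a b)).
Proof.
  intros HK Hh [K' [HK' Hf]]. exists (K * K'). split; [nra |].
  intros a b a' b' Ha Hb Ha' Hb'. eapply Rle_trans; [apply Hh |].
  rewrite Rmult_assoc. apply Rmult_le_compat_l; auto.
Qed.

Lemma box_lipschitz_scal c (f : R -> R -> R) :
  box_lipschitz r f -> box_lipschitz r (fun a b => c * f a b).
Proof.
  apply (box_lipschitz_comp (fun x => c * x) (Rabs c)); [apply Rabs_pos |].
  intros x y. rewrite <- Rabs_mult. right. f_equal. ring.
Qed.

Lemma box_lipschitz_fst (g : R -> R) K : 0 <= K ->
  (forall x y, Rabs x <= r -> Rabs y <= r -> Rabs (g x - g y) <= K * Rabs (x - y)) ->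
  box_lipschitz r (fun a _ => g a).
Proof.
  intros HK Hg. exists K. split; [exact HK |]. intros a b a' b' Ha _ Ha' _.
  eapply Rle_trans; [apply Hg; auto |]. pose proof (Rabs_pos (b - b')).
  apply Rmult_le_compat_l; lra.
Qed.

Lemma box_lipschitz_snd (g : R -> R) K : 0 <= K ->
  (forall x y, Rabs x <= r -> Rabs y <= r -> Rabs (g x - g y) <= K * Rabs (x - y)) ->
  box_lipschitz r (fun _ b => g b).
Proof.
  intros HK Hg. exists K. split; [exact HK |]. intros a b a' b' _ Hb _ Hb'.
  eapply Rle_trans; [apply Hg; auto |]. pose proof (Rabs_pos (a - a')).
  apply Rmult_le_compat_l; lra.
Qed.

End BoxLipschitz.

Definition clamp r z := Rmax (- r) (Rmin r z).
Definition bump r z := Rmax 0 (Rmin 1 (r - Rabs z)).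

Section Cutoff.
Variable r : R.
Hypothesis Hr : 0 <= r.

Ltac unfold_minmax := unfold clamp, bump, Rmax, Rmin, Rabs in *;
  repeat (destruct Rle_dec || destruct Rcase_abs); lra.

Lemma clamp_lipschitz z w : Rabs (clamp r z - clamp r w) <= Rabs (z - w).
Proof. unfold_minmax. Qed.
Lemma clamp_bound z : Rabs (clamp r z) <= r.
Proof. unfold_minmax. Qed.
Lemma clamp_id z : Rabs z <= r -> clamp r z = z.
Proof. unfold_minmax. Qed.
Lemma bump_lipschitz z w : Rabs (bump r z - bump r w) <= Rabs (z - w).
Proof. unfold_minmax. Qed.
Lemma bump_range z : 0 <= bump r z <= 1.
Proof. unfold_minmax. Qed.
Lemma bump_one z : Rabs z <= r - 1 -> bump r z = 1.
Proof. unfold_minmax. Qed.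
Lemma bump_pos_inside z : 0 < bump r z -> Rabs z <= r.
Proof. unfold_minmax. Qed.

Definition cutoff (f : R -> R -> R) a b := bump r a * bump r b * f (clamp r a) (clamp r b).

Lemma box_lipschitz_bounded (f : R -> R -> R) : box_lipschitz r f ->
  exists B, 0 <= B /\ forall a b, Rabs a <= r -> Rabs b <= r -> Rabs (f a b) <= B.
Proof.
  intros [K [HK Hf]]. exists (Rabs (f 0 0) + 2 * K * r).
  split; [pose proof (Rabs_pos (f 0 0)); nra |]. intros a b Ha Hb.
  assert (H0 : Rabs 0 <= r) by (rewrite Rabs_R0; exact Hr).
  pose proof (Hf a b 0 0 Ha Hb H0 H0). rewrite !Rminus_0_r in H.
  pose proof (Rabs_triang_inv (f a b) (f 0 0)).
  assert (K * (Rabs a + Rabs b) <= K * (r + r)) by (apply Rmult_le_compat_l; lra).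
  lra.
Qed.

Lemma cutoff_lipschitz (f : R -> R -> R) : box_lipschitz r f ->
  exists K B, 0 <= K /\ forall a b a' b',
    Rabs (cutoff f a b - cutoff f a' b') <= K * (Rabs (a - a') + Rabs (b - b')) /\
    Rabs (cutoff f a b) <= B.
Proof.
  intros Hlip. destruct (box_lipschitz_bounded f Hlip) as [B [HB HfB]].
  destruct Hlip as [K [HK Hf]].
  exists (K + B), B. split; [lra |]. intros a b a' b'.
  unfold cutoff. pose proof (bump_range a). pose proof (bump_range b).
  pose proof (bump_range a'). pose proof (bump_range b').
  assert (Hpa := bump_lipschitz a a'). assert (Hpb := bump_lipschitz b b').
  set (pa := bump r a) in *. set (pb := bump r b) in *.
  set (pa' := bump r a') in *. set (pb' := bump r b') in *.
  assert (HF : Rabs (f (clamp r a) (clamp r b) - f (clamp r a') (clamp r b'))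
               <= K * (Rabs (a - a') + Rabs (b - b'))).
  { eapply Rle_trans; [apply Hf; apply clamp_bound |]. apply Rmult_le_compat_l; [exact HK |].
    pose proof (clamp_lipschitz a a'). pose proof (clamp_lipschitz b b'). lra. }
  pose proof (HfB _ _ (clamp_bound a) (clamp_bound b)) as HpF.
  pose proof (HfB _ _ (clamp_bound a') (clamp_bound b')) as HpF'.
  set (F := f (clamp r a) (clamp r b)) in *. set (F' := f (clamp r a') (clamp r b')) in *.
  assert (Hpp : 0 <= pa * pb <= 1) by (split; nra).
  split.
  - replace (pa * pb * F - pa' * pb' * F')
      with (pa * pb * (F - F') + (pa * (pb - pb') + pb' * (pa - pa')) * F') by ring.
    eapply Rle_trans; [apply Rabs_triang |].
    rewrite !Rabs_mult, (Rabs_pos_eq pa), (Rabs_pos_eq pb) by lra.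
    assert (pa * pb * Rabs (F - F') <= 1 * (K * (Rabs (a - a') + Rabs (b - b'))))
      by (apply Rmult_le_compat; [lra | apply Rabs_pos | lra | exact HF]).
    assert (Rabs (pa * (pb - pb') + pb' * (pa - pa')) <= Rabs (a - a') + Rabs (b - b')).
    { eapply Rle_trans; [apply Rabs_triang |].
      rewrite !Rabs_mult, (Rabs_pos_eq pa), (Rabs_pos_eq pb') by lra.
      pose proof (Rabs_pos (pb - pb')). pose proof (Rabs_pos (pa - pa')). nra. }
    assert (Rabs (pa * (pb - pb') + pb' * (pa - pa')) * Rabs F'
            <= (Rabs (a - a') + Rabs (b - b')) * B)
      by (apply Rmult_le_compat; auto; apply Rabs_pos).
    lra.
  - rewrite !Rabs_mult, (Rabs_pos_eq pa), (Rabs_pos_eq pb) by lra.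
    apply (Rle_trans _ (1 * Rabs F)); [apply Rmult_le_compat_r; [apply Rabs_pos | lra] | lra].
Qed.

Lemma cutoff_flow_exists (f g : R -> R -> R) a0 b0 :
  box_lipschitz r f -> box_lipschitz r g ->
  exists A B : R -> R, A 0 = a0 /\ B 0 = b0 /\
    filterlim A (at_right 0) (locally a0) /\ filterlim B (at_right 0) (locally b0) /\
    forall t, 0 < t -> is_derive A t (cutoff f (A t) (B t)) /\ is_derive B t (cutoff g (A t) (B t)).
Proof.
  intros Hf Hg.
  destruct (cutoff_lipschitz f Hf) as [K1 [B1 [HK1 H1]]].
  destruct (cutoff_lipschitz g Hg) as [K2 [B2 [HK2 H2]]].
  set (G := fun (i : bool) (z : bool -> R) => cutoff (if i then f else g) (z true) (z false)).
  destruct (picard_existence G (K1 + K2 + 1) (Rabs B1 + Rabs B2) (fun i => if i then a0 else b0))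
    as [Z [HZ0 [HZc HZd]]].
  - lra.
  - pose proof (Rabs_pos B1). pose proof (Rabs_pos B2). lra.
  - intros i z w. unfold G, dist1.
    assert (forall K, 0 <= K -> K <= K1 + K2 + 1 ->
              K * (Rabs (z true - w true) + Rabs (z false - w false))
              <= (K1 + K2 + 1) * (Rabs (z true - w true) + Rabs (z false - w false))).
    { intros K HK HKle. apply Rmult_le_compat_r; [| exact HKle].
      pose proof (Rabs_pos (z true - w true)). pose proof (Rabs_pos (z false - w false)). lra. }
    destruct i; (eapply Rle_trans; [apply H1 || apply H2 | apply H; lra]).
  - intros i z. unfold G. pose proof (Rle_abs B1). pose proof (Rle_abs B2).
    pose proof (Rabs_pos B1). pose proof (Rabs_pos B2).
    destruct i; [pose proof (proj2 (H1 (z true) (z false) 0 0)) |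
                 pose proof (proj2 (H2 (z true) (z false) 0 0))]; lra.
  - assert (HZlim : forall j, filterlim (Z j) (at_right 0) (locally (Z j 0))).
    { intro j. eapply filterlim_filter_le_1; [apply filter_le_within | apply HZc]. }
    exists (Z true), (Z false). rewrite <- (HZ0 true), <- (HZ0 false).
    do 4 (split; [easy |]). intros t Ht. split; apply HZd; exact Ht.
Qed.

End Cutoff.

(** * The closed loop *)

Lemma mul_le_young x y k : 0 < k -> x * y <= k / 2 * x ^ 2 + / (2 * k) * y ^ 2.
Proof.
  intro Hk. assert (0 <= / (2 * k) * (k * x - y) ^ 2)
    by (apply Rmult_le_pos; [left; apply Rinv_0_lt_compat; lra | apply pow2_ge_0]).
  replace (/ (2 * k) * (k * x - y) ^ 2) with (k / 2 * x ^ 2 - x * y + / (2 * k) * y ^ 2) in H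
    by (field; lra).
  lra.
Qed.

Lemma sector_sq_bounds k th b : 0 < k -> k <= th ->
  k ^ 2 * b ^ 2 <= (th * b) ^ 2 /\ b * (th * b) <= (th * b) ^ 2 / k.
Proof.
  intros Hk Hth. split.
  - rewrite Rpow_mult_distr. apply Rmult_le_compat_r; [apply pow2_ge_0 | apply pow_incr; lra].
  - apply (Rmult_le_reg_l k); [lra |].
    replace (k * ((th * b) ^ 2 / k)) with (th * (th * b ^ 2)) by (field; lra).
    assert (0 <= (th - k) * (th * b ^ 2)) by (apply Rmult_le_pos; nra).
    nra.
Qed.

(* The derivative of [W ka] in sector form: [phi1 a = th1 a], [phi2 b = th2 b], [S = sat ph]. *)
Lemma cross_term_bound (a b th1 th2 S ph ep be dl ka k1 k2 : R) :
  0 < ep -> 0 <= be -> 0 < dl -> 0 < k1 -> 0 < k2 -> 0 <= ka <= 1 ->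
  k1 <= th1 -> k2 <= th2 -> dl * S ^ 2 <= S * ph ->
  ka * (/ (2 * k1) + (1 + ep) / k2 + be / (2 * dl * k2 ^ 2)) <= ep * (1 + ep) / 2 ->
  - ep * (1 + ep) * (th2 * b) ^ 2 - be * S * ph
    - ka * (a * (th1 * a) + a * (th2 * b) - (1 + ep) * b * (th2 * b) - be * S * b)
  <= - ka * k1 / 2 * a ^ 2 - ep * (1 + ep) * k2 ^ 2 / 2 * b ^ 2.
Proof.
  intros Hep Hbe Hdl Hk1 Hk2 Hka Hth1 Hth2 HS Hsmall.
  destruct (sector_sq_bounds k2 th2 b Hk2 Hth2) as [Hb2 Hbp].
  set (p := th2 * b) in *.
  assert (Hb2' : b ^ 2 <= / k2 ^ 2 * p ^ 2).
  { apply (Rmult_le_reg_l (k2 ^ 2)); [apply pow_lt; lra |].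
    rewrite <- Rmult_assoc, Rinv_r, Rmult_1_l by (apply pow_nonzero; lra). exact Hb2. }
  assert (Hap := mul_le_young (- a) p k1 Hk1).
  assert (HSb := mul_le_young S (ka * b) dl Hdl).
  assert (Hkb : / (2 * dl) * (ka * b) ^ 2 <= ka / (2 * dl * k2 ^ 2) * p ^ 2).
  { replace (/ (2 * dl) * (ka * b) ^ 2) with (ka ^ 2 / (2 * dl) * b ^ 2) by (field; lra).
    replace (ka / (2 * dl * k2 ^ 2) * p ^ 2) with (ka / (2 * dl) * (/ k2 ^ 2 * p ^ 2))
      by (field; lra).
    apply Rmult_le_compat; [apply Rdiv_le_0_compat; nra | apply pow2_ge_0 | | exact Hb2'].
    unfold Rdiv. apply Rmult_le_compat_r; [left; apply Rinv_0_lt_compat; lra | nra]. }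
  assert (Hka1 : ka * (k1 * a ^ 2) <= ka * (a * (th1 * a))).
  { apply Rmult_le_compat_l; [lra |].
    replace (a * (th1 * a)) with (th1 * a ^ 2) by ring.
    apply Rmult_le_compat_r; [apply pow2_ge_0 | lra]. }
  assert (Hka2 : ka * (- a * p) <= ka * (k1 / 2 * (- a) ^ 2 + / (2 * k1) * p ^ 2))
    by (apply Rmult_le_compat_l; lra).
  assert (Hka3 : ka * ((1 + ep) * (b * p)) <= ka * ((1 + ep) * (p ^ 2 / k2)))
    by (apply Rmult_le_compat_l; [lra | apply Rmult_le_compat_l; lra]).
  assert (HbeS : be * (S * (ka * b)) <= be * (dl / 2 * S ^ 2 + ka / (2 * dl * k2 ^ 2) * p ^ 2))
    by (apply Rmult_le_compat_l; lra).
  assert (HbeSph : be * (dl * S ^ 2) <= be * (S * ph)) by (apply Rmult_le_compat_l; lra).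
  assert (0 <= be * (dl * S ^ 2))
    by (apply Rmult_le_pos; [| apply Rmult_le_pos; [| apply pow2_ge_0]]; lra).
  assert (Hp2 : ka * (/ (2 * k1) + (1 + ep) / k2 + be / (2 * dl * k2 ^ 2)) * p ^ 2
                <= ep * (1 + ep) / 2 * p ^ 2) by (apply Rmult_le_compat_r; [apply pow2_ge_0 | lra]).
  assert (Hfin : ep * (1 + ep) * k2 ^ 2 * b ^ 2 <= ep * (1 + ep) * p ^ 2)
    by (rewrite Rmult_assoc; apply Rmult_le_compat_l; nra).
  assert (E : ka * (/ (2 * k1) + (1 + ep) / k2 + be / (2 * dl * k2 ^ 2)) * p ^ 2
              = ka * (/ (2 * k1) * p ^ 2) + ka * ((1 + ep) * (p ^ 2 / k2))
                + be * (ka / (2 * dl * k2 ^ 2) * p ^ 2)) by (field; lra).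
  replace ((- a) ^ 2) with (a ^ 2) in Hka2 by ring.
  lra.
Qed.

Lemma Rabs_fst_le_norm2 p : Rabs (fst p) <= norm2 p.
Proof.
  unfold norm2. rewrite <- (sqrt_pow2 (Rabs (fst p))) by apply Rabs_pos.
  apply sqrt_le_1_alt. rewrite pow2_abs. pose proof (pow2_ge_0 (snd p)). lra.
Qed.

Lemma Rabs_snd_le_norm2 p : Rabs (snd p) <= norm2 p.
Proof.
  unfold norm2. rewrite <- (sqrt_pow2 (Rabs (snd p))) by apply Rabs_pos.
  apply sqrt_le_1_alt. rewrite pow2_abs. pose proof (pow2_ge_0 (fst p)). lra.
Qed.

Lemma lyap_stable_of_LES F1 F2 : LES F1 F2 -> lyap_stable F1 F2.
Proof.
  intros [r [k [c [Hr [Hk [Hc H]]]]]] e He.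
  exists (Rmin r (e / k)). split; [apply Rmin_pos; [| apply Rdiv_lt_0_compat]; lra |].
  intros x Hx Hn t Ht.
  assert (Hr' : norm2 (x 0) < r) by (eapply Rlt_le_trans; [exact Hn | apply Rmin_l]).
  assert (He' : k * norm2 (x 0) < e).
  { apply (Rmult_lt_reg_l (/ k)); [apply Rinv_0_lt_compat; lra |].
    rewrite <- Rmult_assoc, Rinv_l, Rmult_1_l by lra. rewrite Rmult_comm.
    eapply Rlt_le_trans; [exact Hn | apply Rmin_r]. }
  assert (exp (- c * t) <= 1) by (rewrite <- exp_0; apply exp_le_exp; nra).
  pose proof (exp_pos (- c * t)). pose proof (sqrt_pos (fst (x 0) ^ 2 + snd (x 0) ^ 2)).
  fold (norm2 (x 0)) in H2.
  eapply Rle_lt_trans; [apply (H x Hx Hr' t Ht) |].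
  apply (Rle_lt_trans _ (k * norm2 (x 0))); [| exact He'].
  rewrite Rmult_assoc. apply Rmult_le_compat_l; [lra |]. nra.
Qed.

Lemma is_lim_0_of_exp_bound (f : R -> R) K c n0 : 0 < c ->
  (forall t, 0 <= t -> 0 <= f t <= K * exp (- c * t) * n0) -> is_lim f p_infty 0.
Proof.
  intros Hc Hf.
  assert (Hexp : is_lim (fun t => exp (- c * t)) p_infty 0).
  { eapply is_lim_comp; [exact is_lim_exp_m | |].
    - apply (is_lim_ext (fun t => - (c * t))); [intro; ring |].
      replace m_infty with (Rbar_opp (Rbar_mult c p_infty)).
      + apply is_lim_opp, is_lim_scal_l, is_lim_id.
      + simpl. destruct (Rle_dec 0 c) as [H | H]; [| lra].
        destruct (Rle_lt_or_eq_dec 0 c H); [reflexivity | lra].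
    - exists 0. intros; discriminate. }
  apply (is_lim_le_le_loc (fun _ => 0) (fun t => K * exp (- c * t) * n0) f).
  - exists 0. intros t Ht. apply Hf. lra.
  - apply is_lim_const.
  - replace (Finite 0) with (Rbar_mult (Rbar_mult K 0) n0) by (simpl; f_equal; ring).
    apply is_lim_scal_r, is_lim_scal_l, Hexp.
Qed.

Section ClosedLoop.
Variables l1 l2 ustar delta eps beta : R.
Hypotheses (Hl1 : 0 < l1) (Hl2 : 0 < l2) (Hdelta : 0 < delta) (Heps : 0 < eps) (Hbeta : 0 <= beta).

Lemma phi1_sector r : sector r (/ (exp r * l1)) (exp r / l1) (phi1 l1).
Proof.
  intros a Ha. rewrite <- Rabs_Ropp in Ha.
  destruct (exp_sub1_sector r (- a) Ha) as [th [Hth E]].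
  exists (th / l1). split.
  - assert (0 < / l1) by (apply Rinv_0_lt_compat; lra).
    rewrite Rinv_mult. unfold Rdiv. split; apply Rmult_le_compat_r; lra.
  - unfold phi1. replace (1 - exp (- a)) with (- (exp (- a) - 1)) by ring.
    rewrite E. field. lra.
Qed.

Lemma phi2_sector r : sector r (l2 / exp r) (l2 * exp r) (phi2 l2).
Proof.
  intros b Hb. destruct (exp_sub1_sector r b Hb) as [th [Hth E]].
  exists (l2 * th). split.
  - unfold Rdiv. split; apply Rmult_le_compat_l; lra.
  - unfold phi2. rewrite E. ring.
Qed.

Definition V1 a := (a + exp (- a) - 1) / l1.
Definition V2 b := l2 * (exp b - 1 - b).
Definition V a b := V1 a + (1 + eps) * V2 b.
(* [V] only dissipates [eps (1 + eps) phi2(b)^2]; the cross term makes [W] strict in [a] too. *)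
Definition W ka a b := V a b + ka * (a ^ 2 / 2 - a * b).

Lemma V1_derive a : is_derive V1 a (phi1 l1 a).
Proof. unfold V1, phi1. auto_derive; [lra | field; lra]. Qed.

Lemma V2_derive b : is_derive V2 b (phi2 l2 b).
Proof. unfold V2, phi2. auto_derive; [exact I | ring]. Qed.

Lemma V1_quadratic r a : Rabs a <= r ->
  / (exp r * l1) * a ^ 2 / 2 <= V1 a <= exp r / l1 * a ^ 2 / 2.
Proof.
  intro Ha. apply (quadratic_bounds_of_sector V1 (phi1 l1) r); [exact Ha | | | apply phi1_sector].
  - unfold V1. rewrite Ropp_0, exp_0. field. lra.
  - intros x _. apply V1_derive.
Qed.

Lemma V2_quadratic r b : Rabs b <= r ->
  l2 / exp r * b ^ 2 / 2 <= V2 b <= l2 * exp r * b ^ 2 / 2.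
Proof.
  intro Hb. apply (quadratic_bounds_of_sector V2 (phi2 l2) r); [exact Hb | | | apply phi2_sector].
  - unfold V2. rewrite exp_0. ring.
  - intros x _. apply V2_derive.
Qed.

Lemma V_quadratic r a b : Rabs a <= r -> Rabs b <= r ->
  / (exp r * l1) / 2 * a ^ 2 + (1 + eps) * (l2 / exp r) / 2 * b ^ 2 <= V a b
  <= exp r / l1 / 2 * a ^ 2 + (1 + eps) * (l2 * exp r) / 2 * b ^ 2.
Proof.
  intros Ha Hb. destruct (V1_quadratic r a Ha) as [L1 U1], (V2_quadratic r b Hb) as [L2 U2].
  unfold V. split.
  - assert ((1 + eps) * (l2 / exp r * b ^ 2 / 2) <= (1 + eps) * V2 b)
      by (apply Rmult_le_compat_l; lra).
    unfold Rdiv in *. lra.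
  - assert ((1 + eps) * V2 b <= (1 + eps) * (l2 * exp r * b ^ 2 / 2))
      by (apply Rmult_le_compat_l; lra).
    unfold Rdiv in *. lra.
Qed.

Lemma V1_nonneg a : 0 <= V1 a.
Proof.
  destruct (V1_quadratic (Rabs a) a (Rle_refl _)) as [H _]. eapply Rle_trans; [| exact H].
  pose proof (exp_pos (Rabs a)). pose proof (pow2_ge_0 a).
  apply Rdiv_le_0_compat; [apply Rmult_le_pos; [left; apply Rinv_0_lt_compat; nra |] |]; lra.
Qed.

Lemma V2_nonneg b : 0 <= V2 b.
Proof.
  destruct (V2_quadratic (Rabs b) b (Rle_refl _)) as [H _]. eapply Rle_trans; [| exact H].
  pose proof (exp_pos (Rabs b)). pose proof (pow2_ge_0 b).
  apply Rdiv_le_0_compat; [apply Rmult_le_pos; [apply Rdiv_le_0_compat |] |]; lra.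
Qed.

Lemma V_nonneg a b : 0 <= V a b.
Proof. pose proof (V1_nonneg a). pose proof (V2_nonneg b). unfold V. nra. Qed.

Lemma V_sublevel_bounded v a b : V a b <= v ->
  Rabs a <= 1 + l1 * v + v / l2 /\ Rabs b <= 1 + l1 * v + v / l2.
Proof.
  intro Hv.
  assert (HV1 : (Rabs a - 1) / l1 <= V1 a).
  { unfold V1, Rdiv. apply Rmult_le_compat_r; [left; apply Rinv_0_lt_compat; lra |].
    destruct (Rle_or_lt 0 a).
    - rewrite Rabs_pos_eq by lra. pose proof (exp_pos (- a)). lra.
    - rewrite Rabs_left by lra. pose proof (exp_ge_twice (- a)). lra. }
  assert (HV2 : l2 * (Rabs b - 1) <= V2 b).
  { unfold V2. apply Rmult_le_compat_l; [lra |].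
    destruct (Rle_or_lt 0 b).
    - rewrite Rabs_pos_eq by lra. pose proof (exp_ge_twice b). lra.
    - rewrite Rabs_left by lra. pose proof (exp_pos b). lra. }
  pose proof (V1_nonneg a). pose proof (V2_nonneg b).
  unfold V in Hv.
  assert (V2 b <= (1 + eps) * V2 b) by nra.
  assert (Ha : Rabs a - 1 <= l1 * v).
  { replace (Rabs a - 1) with (l1 * ((Rabs a - 1) / l1)) by (field; lra).
    apply Rmult_le_compat_l; lra. }
  assert (Hb : Rabs b - 1 <= v / l2).
  { replace (Rabs b - 1) with (l2 * (Rabs b - 1) / l2) by (field; lra).
    unfold Rdiv. apply Rmult_le_compat_r; [left; apply Rinv_0_lt_compat |]; lra. }
  assert (0 <= v) by nra.
  assert (0 <= l1 * v) by (apply Rmult_le_pos; lra).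
  assert (0 <= v / l2) by (apply Rdiv_le_0_compat; lra).
  lra.
Qed.

Definition field1 a b :=
  - (1 + eps) * phi2 l2 b - beta * sat delta (varphi l1 l2 eps (a, b)).
Definition field2 a b :=
  phi1 l1 a - eps * phi2 l2 b - beta * sat delta (varphi l1 l2 eps (a, b)).

Lemma cl_f1_eq eta : cl_f1 l1 l2 ustar delta eps beta eta = field1 (fst eta) (snd eta).
Proof.
  destruct eta as [a b]. unfold cl_f1, u_fb, field1, sat. simpl. field.
  apply Rgt_not_eq, (Rlt_le_trans _ delta); [exact Hdelta | apply le_sqrt_sq_plus; exact Hdelta].
Qed.

Lemma cl_f2_eq eta : cl_f2 l1 l2 ustar delta eps beta eta = field2 (fst eta) (snd eta).
Proof.
  destruct eta as [a b]. unfold cl_f2, u_fb, field2, sat. simpl. field.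
  apply Rgt_not_eq, (Rlt_le_trans _ delta); [exact Hdelta | apply le_sqrt_sq_plus; exact Hdelta].
Qed.

Definition lie ka a b :=
  (phi1 l1 a + ka * (a - b)) * field1 a b + ((1 + eps) * phi2 l2 b - ka * a) * field2 a b.

Lemma lie0_nonpos a b : lie 0 a b <= 0.
Proof.
  set (ph := varphi l1 l2 eps (a, b)).
  replace (lie 0 a b) with (- (eps * (1 + eps) * phi2 l2 b ^ 2) - beta * (sat delta ph * ph))
    by (unfold lie, field1, field2, ph, varphi; simpl; ring).
  pose proof (sat_sq_le delta Hdelta ph). pose proof (pow2_ge_0 (sat delta ph)).
  assert (0 <= beta * (sat delta ph * ph)) by (apply Rmult_le_pos; nra).
  assert (0 <= eps * (1 + eps) * phi2 l2 b ^ 2)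
    by (apply Rmult_le_pos; [apply Rmult_le_pos | apply pow2_ge_0]; lra).
  lra.
Qed.

Lemma lie_le_on_box r ka a b : Rabs a <= r -> Rabs b <= r -> 0 <= ka <= 1 ->
  ka * (/ (2 * / (exp r * l1)) + (1 + eps) / (l2 / exp r)
        + beta / (2 * delta * (l2 / exp r) ^ 2)) <= eps * (1 + eps) / 2 ->
  lie ka a b <= - ka * / (exp r * l1) / 2 * a ^ 2
                - eps * (1 + eps) * (l2 / exp r) ^ 2 / 2 * b ^ 2.
Proof.
  intros Ha Hb Hka Hsmall.
  destruct (phi1_sector r a Ha) as [th1 [Hth1 E1]].
  destruct (phi2_sector r b Hb) as [th2 [Hth2 E2]].
  pose proof (exp_pos r).
  set (S := sat delta (varphi l1 l2 eps (a, b))).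
  replace (lie ka a b) with
    (- eps * (1 + eps) * (th2 * b) ^ 2 - beta * S * varphi l1 l2 eps (a, b)
     - ka * (a * (th1 * a) + a * (th2 * b) - (1 + eps) * b * (th2 * b) - beta * S * b))
    by (unfold lie, field1, field2; fold S; unfold varphi; simpl; rewrite E1, E2; ring).
  apply (cross_term_bound _ _ _ _ _ _ _ _ delta); try lra.
  - apply Rinv_0_lt_compat. nra.
  - apply Rdiv_lt_0_compat; lra.
  - apply sat_sq_le. exact Hdelta.
Qed.

Lemma W_quadratic_on_box r ka a b : Rabs a <= r -> Rabs b <= r ->
  0 <= ka <= Rmin (/ (exp r * l1)) (l2 / exp r) / 2 ->
  Rmin (/ (exp r * l1)) (l2 / exp r) / 4 * (a ^ 2 + b ^ 2) <= W ka a b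
  <= (exp r / l1 / 2 + (1 + eps) * (l2 * exp r) / 2 + ka) * (a ^ 2 + b ^ 2).
Proof.
  intros Ha Hb Hka. pose proof (exp_pos r) as HE.
  destruct (V_quadratic r a b Ha Hb) as [HVl HVu].
  set (k1 := / (exp r * l1)) in *. set (k2 := l2 / exp r) in *.
  set (mV := Rmin k1 k2 / 2) in *.
  pose proof (pow2_ge_0 a) as Ha2. pose proof (pow2_ge_0 b) as Hb2.
  assert (Hm1 : mV * a ^ 2 <= k1 / 2 * a ^ 2).
  { apply Rmult_le_compat_r; [lra |]. unfold mV. pose proof (Rmin_l k1 k2). lra. }
  assert (Hm2 : mV * b ^ 2 <= (1 + eps) * k2 / 2 * b ^ 2).
  { apply Rmult_le_compat_r; [lra |]. unfold mV. pose proof (Rmin_r k1 k2).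
    assert (0 < k2) by (apply Rdiv_lt_0_compat; lra).
    assert (k2 <= (1 + eps) * k2) by nra. lra. }
  assert (Hkb : ka * b ^ 2 <= mV * b ^ 2) by (apply Rmult_le_compat_r; lra).
  assert (Hkab : 0 <= ka * (a - b) ^ 2) by (apply Rmult_le_pos; [lra | apply pow2_ge_0]).
  assert (Hkab' : 0 <= ka * (a + b) ^ 2) by (apply Rmult_le_pos; [lra | apply pow2_ge_0]).
  assert (Hkb0 : 0 <= ka * b ^ 2) by (apply Rmult_le_pos; lra).
  replace (Rmin k1 k2 / 4) with (mV / 2) by (unfold mV; field).
  split.
  - unfold W. nra.
  - assert (0 <= exp r / l1 / 2 * b ^ 2)
      by (apply Rmult_le_pos; [repeat apply Rdiv_le_0_compat |]; lra).
    assert (0 <= (1 + eps) * (l2 * exp r) / 2 * a ^ 2)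
      by (apply Rmult_le_pos; [apply Rdiv_le_0_compat; [apply Rmult_le_pos; nra |] |]; lra).
    unfold W. nra.
Qed.

Lemma W_strict_on_box r : 0 < r -> exists ka m M c, 0 < m /\ 0 < M /\ 0 < c /\
  forall a b, Rabs a <= r -> Rabs b <= r ->
    m * (a ^ 2 + b ^ 2) <= W ka a b <= M * (a ^ 2 + b ^ 2) /\
    lie ka a b <= - c * (a ^ 2 + b ^ 2).
Proof.
  intro Hr. pose proof (exp_pos r) as HE.
  set (k1 := / (exp r * l1)). set (k2 := l2 / exp r).
  assert (Hk1 : 0 < k1) by (apply Rinv_0_lt_compat; nra).
  assert (Hk2 : 0 < k2) by (apply Rdiv_lt_0_compat; lra).
  set (A := / (2 * k1) + (1 + eps) / k2 + beta / (2 * delta * k2 ^ 2)).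
  assert (HA : 0 < A).
  { assert (0 < / (2 * k1)) by (apply Rinv_0_lt_compat; lra).
    assert (0 < (1 + eps) / k2) by (apply Rdiv_lt_0_compat; lra).
    assert (0 <= beta / (2 * delta * k2 ^ 2))
      by (apply Rdiv_le_0_compat; [lra | apply Rmult_lt_0_compat; [| apply pow_lt]; lra]).
    unfold A. lra. }
  assert (Hm : 0 < Rmin k1 k2) by (apply Rmin_pos; lra).
  set (ka := Rmin 1 (Rmin (Rmin k1 k2 / 2) (eps * (1 + eps) / (2 * A)))).
  assert (Hka : 0 < ka).
  { apply Rmin_pos; [lra | apply Rmin_pos; [lra | apply Rdiv_lt_0_compat; nra]]. }
  assert (Hka1 : ka <= 1) by apply Rmin_l.
  assert (Hka2 : ka <= Rmin k1 k2 / 2) by (eapply Rle_trans; [apply Rmin_r | apply Rmin_l]).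
  assert (HkaA : ka * A <= eps * (1 + eps) / 2).
  { assert (ka <= eps * (1 + eps) / (2 * A)) by (eapply Rle_trans; [apply Rmin_r | apply Rmin_r]).
    replace (eps * (1 + eps) / 2) with (eps * (1 + eps) / (2 * A) * A) by (field; lra).
    apply Rmult_le_compat_r; lra. }
  set (c := Rmin (ka * k1 / 2) (eps * (1 + eps) * k2 ^ 2 / 2)).
  exists ka, (Rmin k1 k2 / 4), (exp r / l1 / 2 + (1 + eps) * (l2 * exp r) / 2 + ka), c.
  split; [lra |]. split.
  { assert (0 < exp r / l1 / 2) by (repeat apply Rdiv_lt_0_compat; lra).
    assert (0 < (1 + eps) * (l2 * exp r) / 2)
      by (apply Rdiv_lt_0_compat; [apply Rmult_lt_0_compat; [| apply Rmult_lt_0_compat] |]; lra).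
    lra. }
  split.
  { apply Rmin_pos; apply Rdiv_lt_0_compat; try lra.
    - apply Rmult_lt_0_compat; lra.
    - apply Rmult_lt_0_compat; [apply Rmult_lt_0_compat | apply pow_lt]; lra. }
  intros a b Ha Hb.
  split; [apply W_quadratic_on_box; [exact Ha | exact Hb | split; [lra | exact Hka2]] |].
  eapply Rle_trans; [apply lie_le_on_box; [exact Ha | exact Hb | lra | exact HkaA] |].
  fold k1 k2. pose proof (pow2_ge_0 a). pose proof (pow2_ge_0 b).
  assert (c * a ^ 2 <= ka * k1 / 2 * a ^ 2) by (apply Rmult_le_compat_r; [lra | apply Rmin_l]).
  assert (c * b ^ 2 <= eps * (1 + eps) * k2 ^ 2 / 2 * b ^ 2)
    by (apply Rmult_le_compat_r; [lra | apply Rmin_r]).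
  lra.
Qed.

Lemma is_derive_W ka (A B : R -> R) t dA dB : is_derive A t dA -> is_derive B t dB ->
  is_derive (fun s => W ka (A s) (B s)) t
    ((phi1 l1 (A t) + ka * (A t - B t)) * dA + ((1 + eps) * phi2 l2 (B t) - ka * A t) * dB).
Proof.
  intros HA HB. unfold W, V, V1, V2. auto_derive.
  - repeat split; try (now exists dA); try (now exists dB).
  - replace (Derive (fun x => A x) t) with dA by (symmetry; now apply is_derive_unique).
    replace (Derive (fun x => B x) t) with dB by (symmetry; now apply is_derive_unique).
    unfold phi1, phi2. field. lra.
Qed.

Lemma filterlim_W {T : Type} {F : (T -> Prop) -> Prop} {FF : Filter F} ka (A B : T -> R) a b :
  filterlim A F (locally a) -> filterlim B F (locally b) ->
  filterlim (fun t => W ka (A t) (B t)) F (locally (W ka a b)).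
Proof.
  intros HA HB.
  assert (Hplus : forall f g : T -> R, forall u v, filterlim f F (locally u) ->
            filterlim g F (locally v) -> filterlim (fun t => f t + g t) F (locally (u + v))).
  { intros f g u v Hf Hg. eapply filterlim_comp_2; [exact Hf | exact Hg |].
    exact (@filterlim_plus R_AbsRing R_NormedModule u v). }
  assert (Hmult : forall f g : T -> R, forall u v, filterlim f F (locally u) ->
            filterlim g F (locally v) -> filterlim (fun t => f t * g t) F (locally (u * v))).
  { intros f g u v Hf Hg. eapply filterlim_comp_2; [exact Hf | exact Hg |].
    exact (@filterlim_mult R_AbsRing u v). }
  apply (filterlim_ext (fun t => (V1 (A t) + ka * (A t ^ 2 / 2)) + (1 + eps) * V2 (B t)
                                  + (- ka * A t) * B t)); [intro; unfold W, V; ring |].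
  replace (W ka a b) with ((V1 a + ka * (a ^ 2 / 2)) + (1 + eps) * V2 b + (- ka * a) * b)
    by (unfold W, V; ring).
  assert (Hcont : forall (f : T -> R) (g : R -> R) u,
            filterlim f F (locally u) -> ex_derive g u ->
            filterlim (fun t => g (f t)) F (locally (g u)))
    by (intros f g u Hf Hg; eapply filterlim_comp;
        [exact Hf | apply (ex_derive_continuous (V := R_NormedModule)), Hg]).
  apply Hplus; [apply Hplus | apply Hmult; [| exact HB]].
  - apply (Hcont A (fun u => V1 u + ka * (u ^ 2 / 2))); [exact HA |].
    unfold V1. auto_derive. lra.
  - apply Hmult; [apply filterlim_const |].
    apply (Hcont B V2); [exact HB |]. unfold V2. auto_derive. exact I.
  - apply (Hcont A (fun u => - ka * u)); [exact HA |]. auto_derive. exact I.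
Qed.

Let F1 := cl_f1 l1 l2 ustar delta eps beta.
Let F2 := cl_f2 l1 l2 ustar delta eps beta.

Lemma W_along_solution ka x : is_solution F1 F2 x ->
  filterlim (fun t => W ka (fst (x t)) (snd (x t))) (at_right 0)
    (locally (W ka (fst (x 0)) (snd (x 0)))) /\
  forall t, 0 < t ->
    is_derive (fun t => W ka (fst (x t)) (snd (x t))) t (lie ka (fst (x t)) (snd (x t))).
Proof.
  intros [H1 [H2 H3]]. split.
  - apply filterlim_W; [exact H1 | exact H2].
  - intros t Ht. destruct (H3 t Ht) as [D1 D2].
    unfold F1, F2 in D1, D2. rewrite cl_f1_eq in D1. rewrite cl_f2_eq in D2.
    exact (is_derive_W ka _ _ t _ _ D1 D2).
Qed.

Lemma V_nonincreasing x : is_solution F1 F2 x ->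
  forall t, 0 <= t -> V (fst (x t)) (snd (x t)) <= V (fst (x 0)) (snd (x 0)).
Proof.
  intros Hx t Ht. destruct (W_along_solution 0 x Hx) as [Hc Hd].
  pose proof (le_at_right0_of_derive_nonpos _ _ Hc Hd (fun s _ => lie0_nonpos _ _) t Ht).
  unfold W in H. lra.
Qed.

Lemma solution_in_box x v : is_solution F1 F2 x -> V (fst (x 0)) (snd (x 0)) <= v ->
  forall t, 0 <= t ->
    Rabs (fst (x t)) <= 1 + l1 * v + v / l2 /\ Rabs (snd (x t)) <= 1 + l1 * v + v / l2.
Proof.
  intros Hx Hv t Ht. apply V_sublevel_bounded.
  eapply Rle_trans; [apply V_nonincreasing |]; eauto.
Qed.

Lemma exp_decay_in_box r : 0 < r -> exists K c, 0 < K /\ 0 < c /\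
  forall x, is_solution F1 F2 x ->
    (forall t, 0 <= t -> Rabs (fst (x t)) <= r /\ Rabs (snd (x t)) <= r) ->
    forall t, 0 <= t -> norm2 (x t) <= K * exp (- c * t) * norm2 (x 0).
Proof.
  intro Hr. destruct (W_strict_on_box r Hr) as [ka [m [M [c [Hm [HM [Hc HW]]]]]]].
  exists (sqrt (M / m)), (c / M / 2).
  split; [apply sqrt_lt_R0, Rdiv_lt_0_compat; lra |].
  split; [repeat apply Rdiv_lt_0_compat; lra |].
  intros x Hx Hbox. destruct (W_along_solution ka x Hx) as [Hc0 Hd].
  apply (sqrt_decay_of_quadratic_lyapunov (fun t => W ka (fst (x t)) (snd (x t)))
           (fun t => lie ka (fst (x t)) (snd (x t))) (fun t => fst (x t) ^ 2 + snd (x t) ^ 2)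
           m M c); auto.
  - intros t Ht. destruct (Hbox t Ht) as [Ha Hb]. split.
    + pose proof (pow2_ge_0 (fst (x t))). pose proof (pow2_ge_0 (snd (x t))). lra.
    + apply HW; auto.
  - intros t Ht. destruct (Hbox t (Rlt_le _ _ Ht)) as [Ha Hb]. apply HW; auto.
Qed.

Lemma closed_loop_LES : LES F1 F2.
Proof.
  set (v := exp 1 / l1 / 2 + (1 + eps) * (l2 * exp 1) / 2).
  assert (Hv : 0 <= v).
  { pose proof (exp_pos 1). unfold v.
    assert (0 <= exp 1 / l1 / 2) by (repeat apply Rdiv_le_0_compat; lra).
    assert (0 <= (1 + eps) * (l2 * exp 1) / 2)
      by (apply Rdiv_le_0_compat; [apply Rmult_le_pos; [| apply Rmult_le_pos] |]; lra).
    lra. }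
  set (r := 1 + l1 * v + v / l2).
  assert (Hr : 0 < r).
  { assert (0 <= l1 * v) by (apply Rmult_le_pos; lra).
    assert (0 <= v / l2) by (apply Rdiv_le_0_compat; lra). unfold r. lra. }
  destruct (exp_decay_in_box r Hr) as [K [c [HK [Hc Hdecay]]]].
  exists 1, K, c. split; [lra |]. split; [exact HK |]. split; [exact Hc |].
  intros x Hx Hn. apply Hdecay; [exact Hx |]. apply (solution_in_box x v Hx).
  pose proof (Rabs_fst_le_norm2 (x 0)). pose proof (Rabs_snd_le_norm2 (x 0)).
  destruct (V_quadratic 1 (fst (x 0)) (snd (x 0))) as [_ HV]; try lra.
  eapply Rle_trans; [exact HV |]. unfold v.
  assert (Ha2 : fst (x 0) ^ 2 <= 1)
    by (rewrite <- pow2_abs; pose proof (Rabs_pos (fst (x 0))); simpl; nra).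
  assert (Hb2 : snd (x 0) ^ 2 <= 1)
    by (rewrite <- pow2_abs; pose proof (Rabs_pos (snd (x 0))); simpl; nra).
  pose proof (exp_pos 1).
  assert (exp 1 / l1 / 2 * fst (x 0) ^ 2 <= exp 1 / l1 / 2)
    by (rewrite <- (Rmult_1_r (exp 1 / l1 / 2)) at 2; apply Rmult_le_compat_l;
        [repeat apply Rdiv_le_0_compat |]; lra).
  assert ((1 + eps) * (l2 * exp 1) / 2 * snd (x 0) ^ 2 <= (1 + eps) * (l2 * exp 1) / 2)
    by (rewrite <- (Rmult_1_r ((1 + eps) * (l2 * exp 1) / 2)) at 2; apply Rmult_le_compat_l;
        [apply Rdiv_le_0_compat; [apply Rmult_le_pos; [| apply Rmult_le_pos] |] |]; lra).
  lra.
Qed.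

Lemma closed_loop_attractive : glob_attractive F1 F2.
Proof.
  intros x Hx. set (v := V (fst (x 0)) (snd (x 0))).
  assert (Hv : 0 <= v) by apply V_nonneg.
  set (r := 1 + l1 * v + v / l2).
  assert (Hr : 0 < r).
  { assert (0 <= l1 * v) by (apply Rmult_le_pos; lra).
    assert (0 <= v / l2) by (apply Rdiv_le_0_compat; lra). unfold r. lra. }
  destruct (exp_decay_in_box r Hr) as [K [c [HK [Hc Hdecay]]]].
  apply (is_lim_0_of_exp_bound _ K c (norm2 (x 0))); [exact Hc |].
  intros t Ht. split; [apply sqrt_pos |].
  apply Hdecay; [exact Hx | | exact Ht].
  apply (solution_in_box x v Hx). apply Rle_refl.
Qed.

Lemma closed_loop_equilibrium : F1 (0, 0) = 0 /\ F2 (0, 0) = 0.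
Proof.
  unfold F1, F2. rewrite cl_f1_eq, cl_f2_eq. simpl.
  assert (Hphi1 : phi1 l1 0 = 0) by (unfold phi1; rewrite Ropp_0, exp_0; field; lra).
  assert (Hphi2 : phi2 l2 0 = 0) by (unfold phi2; rewrite exp_0; ring).
  unfold field1, field2, varphi. simpl. rewrite Hphi1, Hphi2.
  replace (0 + (1 + eps) * 0) with 0 by ring.
  rewrite sat_nonneg by lra. unfold Rdiv. split; ring.
Qed.

Lemma u_fb_pos eta : eps * l2 + beta < ustar -> 0 < u_fb l1 l2 ustar delta eps beta eta.
Proof.
  intro Hc.
  replace (u_fb l1 l2 ustar delta eps beta eta)
    with (ustar + eps * phi2 l2 (snd eta) + beta * sat delta (varphi l1 l2 eps eta))
    by (unfold u_fb, sat, Rdiv; ring).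
  assert (- l2 < phi2 l2 (snd eta)) by (unfold phi2; pose proof (exp_pos (snd eta)); nra).
  pose proof (sat_gt_m1 delta Hdelta (varphi l1 l2 eps eta)).
  assert (eps * - l2 < eps * phi2 l2 (snd eta)) by (apply Rmult_lt_compat_l; lra).
  assert (beta * -1 <= beta * sat delta (varphi l1 l2 eps eta))
    by (apply Rmult_le_compat_l; lra).
  lra.
Qed.

Lemma phi1_lipschitz_on r x y : Rabs x <= r -> Rabs y <= r ->
  Rabs (phi1 l1 x - phi1 l1 y) <= exp r / l1 * Rabs (x - y).
Proof.
  intros Hx Hy. apply (Rabs_sub_le_of_derive (phi1 l1) (fun z => exp (- z) / l1)).
  intros z Hz. split.
  - unfold phi1. auto_derive; [lra | field; lra].
  - rewrite Rabs_pos_eq by (apply Rdiv_le_0_compat; [left; apply exp_pos | lra]).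
    unfold Rdiv. apply Rmult_le_compat_r; [left; apply Rinv_0_lt_compat; lra |].
    apply exp_le_exp. apply Rabs_le_between in Hx, Hy.
    unfold Rmin, Rmax in Hz. destruct (Rle_dec y x); lra.
Qed.

Lemma phi2_lipschitz_on r x y : Rabs x <= r -> Rabs y <= r ->
  Rabs (phi2 l2 x - phi2 l2 y) <= l2 * exp r * Rabs (x - y).
Proof.
  intros Hx Hy. apply (Rabs_sub_le_of_derive (phi2 l2) (fun z => l2 * exp z)).
  intros z Hz. split.
  - unfold phi2. auto_derive; [exact I | ring].
  - rewrite Rabs_pos_eq by (pose proof (exp_pos z); nra).
    apply Rmult_le_compat_l; [lra |].
    apply exp_le_exp. apply Rabs_le_between in Hx, Hy.
    unfold Rmin, Rmax in Hz. destruct (Rle_dec y x); lra.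
Qed.

Lemma varphi_box_lipschitz r : box_lipschitz r (fun a b => varphi l1 l2 eps (a, b)).
Proof.
  pose proof (exp_pos r).
  apply box_lipschitz_plus; [| apply box_lipschitz_scal];
    [apply (box_lipschitz_fst r (phi1 l1) (exp r / l1))
    | apply (box_lipschitz_snd r (phi2 l2) (l2 * exp r))].
  - apply Rdiv_le_0_compat; lra.
  - intros; apply phi1_lipschitz_on; auto.
  - nra.
  - intros; apply phi2_lipschitz_on; auto.
Qed.

Lemma field1_box_lipschitz r : box_lipschitz r field1.
Proof.
  apply (box_lipschitz_ext r (fun a b => - (1 + eps) * phi2 l2 b
                                         + - beta * sat delta (varphi l1 l2 eps (a, b))));
    [intros; unfold field1; ring |].
  pose proof (exp_pos r).
  apply box_lipschitz_plus; apply box_lipschitz_scal.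
  - apply (box_lipschitz_snd r (phi2 l2) (l2 * exp r));
      [nra | intros; apply phi2_lipschitz_on; auto].
  - apply (box_lipschitz_comp r (sat delta) (/ delta));
      [left; apply Rinv_0_lt_compat; lra | apply sat_lipschitz; lra | apply varphi_box_lipschitz].
Qed.

Lemma field2_box_lipschitz r : box_lipschitz r field2.
Proof.
  apply (box_lipschitz_ext r (fun a b => phi1 l1 a + - eps * phi2 l2 b
                                         + - beta * sat delta (varphi l1 l2 eps (a, b))));
    [intros; unfold field2; ring |].
  pose proof (exp_pos r).
  apply box_lipschitz_plus; [apply box_lipschitz_plus |]; try apply box_lipschitz_scal.
  - apply (box_lipschitz_fst r (phi1 l1) (exp r / l1));
      [apply Rdiv_le_0_compat; lra | intros; apply phi1_lipschitz_on; auto].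
  - apply (box_lipschitz_snd r (phi2 l2) (l2 * exp r));
      [nra | intros; apply phi2_lipschitz_on; auto].
  - apply (box_lipschitz_comp r (sat delta) (/ delta));
      [left; apply Rinv_0_lt_compat; lra | apply sat_lipschitz; lra | apply varphi_box_lipschitz].
Qed.

Lemma lie0_cutoff_nonpos r a b : 0 <= r ->
  phi1 l1 a * cutoff r field1 a b + (1 + eps) * phi2 l2 b * cutoff r field2 a b <= 0.
Proof.
  intro Hr. unfold cutoff.
  destruct (bump_range r a) as [Ha _], (bump_range r b) as [Hb _].
  destruct (Rle_lt_or_eq_dec _ _ Ha) as [Ha' | Ea]; [| rewrite <- Ea; lra].
  destruct (Rle_lt_or_eq_dec _ _ Hb) as [Hb' | Eb]; [| rewrite <- Eb; lra].
  rewrite !clamp_id by first [exact Hr | apply bump_pos_inside; assumption].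
  pose proof (lie0_nonpos a b) as Hlie. unfold lie in Hlie.
  assert (0 <= bump r a * bump r b) by (apply Rmult_le_pos; lra). nra.
Qed.

Lemma V_nonincreasing_cutoff_flow r (A B : R -> R) : 0 <= r ->
  filterlim A (at_right 0) (locally (A 0)) -> filterlim B (at_right 0) (locally (B 0)) ->
  (forall t, 0 < t -> is_derive A t (cutoff r field1 (A t) (B t)) /\
                      is_derive B t (cutoff r field2 (A t) (B t))) ->
  forall t, 0 <= t -> V (A t) (B t) <= V (A 0) (B 0).
Proof.
  intros Hr HA HB Hd t Ht.
  enough (HW : W 0 (A t) (B t) <= W 0 (A 0) (B 0)) by (unfold W in HW; lra).
  apply (le_at_right0_of_derive_nonpos (fun t => W 0 (A t) (B t))
           (fun t => (phi1 l1 (A t) + 0 * (A t - B t)) * cutoff r field1 (A t) (B t)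
                     + ((1 + eps) * phi2 l2 (B t) - 0 * A t) * cutoff r field2 (A t) (B t)));
    [apply filterlim_W; assumption | | | exact Ht].
  - intros s Hs. destruct (Hd s Hs). apply is_derive_W; assumption.
  - intros s _. pose proof (lie0_cutoff_nonpos r (A s) (B s) Hr). lra.
Qed.

(* The cut-off field is globally Lipschitz and agrees with the closed loop on the box of
   radius [r - 1], which contains the sublevel set of [V] through the initial state.  [V] does
   not increase along the cut-off flow either, so that flow never leaves the box. *)
Lemma closed_loop_forward_complete : forward_complete F1 F2.
Proof.
  intros [a0 b0]. set (v := V a0 b0).
  assert (Hv : 0 <= v) by apply V_nonneg.
  set (r := 2 + l1 * v + v / l2).
  assert (Hr : 1 + l1 * v + v / l2 = r - 1) by (unfold r; ring).
  assert (Hr0 : 0 <= r).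
  { assert (0 <= l1 * v) by (apply Rmult_le_pos; lra).
    assert (0 <= v / l2) by (apply Rdiv_le_0_compat; lra). unfold r. lra. }
  destruct (cutoff_flow_exists r Hr0 field1 field2 a0 b0
              (field1_box_lipschitz r) (field2_box_lipschitz r))
    as [A [B [HA0 [HB0 [HA [HB Hd]]]]]].
  assert (Hbox : forall t, 0 <= t -> Rabs (A t) <= r - 1 /\ Rabs (B t) <= r - 1).
  { intros t Ht. rewrite <- Hr. apply V_sublevel_bounded. unfold v. rewrite <- HA0, <- HB0.
    rewrite <- HA0 in HA. rewrite <- HB0 in HB.
    apply (V_nonincreasing_cutoff_flow r); assumption. }
  assert (Hcut : forall f t, 0 <= t -> cutoff r f (A t) (B t) = f (A t) (B t)).
  { intros f t Ht. destruct (Hbox t Ht). unfold cutoff.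
    rewrite !bump_one, !clamp_id by lra. ring. }
  exists (fun t => (A t, B t)). split; [| simpl; rewrite HA0, HB0; reflexivity].
  split; [| split]; simpl; rewrite ?HA0, ?HB0; [exact HA | exact HB |].
  intros t Ht. unfold F1, F2. rewrite cl_f1_eq, cl_f2_eq. simpl.
  rewrite <- (Hcut field1 t), <- (Hcut field2 t) by lra. apply Hd, Ht.
Qed.

End ClosedLoop.

Theorem theorem3 (l1 l2 ustar delta eps beta : R) :
  0 < l1 -> 0 < l2 -> 0 < ustar -> 0 < delta -> 0 < eps -> 0 <= beta ->
  eps * l2 + beta < ustar ->
  GAS (cl_f1 l1 l2 ustar delta eps beta) (cl_f2 l1 l2 ustar delta eps beta) /\
  LES (cl_f1 l1 l2 ustar delta eps beta) (cl_f2 l1 l2 ustar delta eps beta) /\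
  (forall x : R -> R * R,
     is_solution (cl_f1 l1 l2 ustar delta eps beta)
                 (cl_f2 l1 l2 ustar delta eps beta) x ->
     forall t, 0 <= t -> 0 < u_fb l1 l2 ustar delta eps beta (x t)).
Proof.
  intros Hl1 Hl2 _ Hdelta Heps Hbeta Hsmall.
  assert (Hles := closed_loop_LES l1 l2 ustar delta eps beta Hl1 Hl2 Hdelta Heps Hbeta).
  destruct (closed_loop_equilibrium l1 l2 ustar delta eps beta Hl1 Hdelta) as [E1 E2].
  split; [| split; [exact Hles |]].
  - split; [exact E1 | split; [exact E2 | split; [| split]]].
    + now apply closed_loop_forward_complete.
    + now apply lyap_stable_of_LES.
    + now apply closed_loop_attractive.
  - intros x _ t _. now apply u_fb_pos.
Qed.
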